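(* Let $(a_m)_{m\ge1}$ be positive reals with $\sum_m a_m<\infty$, put $M=\sup_m a_m$, and let $(t_m)_{m\ge1}$ be complex numbers with $\sup_m|t_m|\le T<\infty$. Then each $\theta_{\infty;k}(\vec t)$ is an absolutely convergent series, and for all complex $z$ with $|z|M(1+T)<1$ the series $\sum_{k\ge0}\theta_{\infty;k}(\vec t)z^k$ converges absolutely and \[ \sum_{k\ge0}\theta_{\infty;k}(\vec t)z^k=\prod_{m=1}^{\infty}\Big(1+\frac{a_mz}{1-a_mzt_m}\Big)=\exp\Big(\sum_{j=1}^\infty\frac{z^j}{j}\sum_{m=1}^\infty a_m^j\big(t_m^j-(t_m-1)^j\big)\Big). \] In particular, with $t_m=t$ for all $m$ and $A_\infty(j)=\sum_{m\ge1}a_m^j$, $\sum_k\theta_{\infty;k}(t)z^k=\prod_{m\ge1}\big(1+\frac{a_mz}{1-a_mzt}\big)=\exp\big(\sum_{j\ge1}\frac{z^j}{j}A_\infty(j)(t^j-(t-1)^j)\big)$.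
   Context: For $k\ge0$ let $\mathcal M_{\infty,k}=\{(\ell_1,\dots,\ell_k)\in\mathbb N^k:\ell_1\ge\cdots\ge\ell_k\ge1\}$, $w(\vec\ell)=\prod_j a_{\ell_j}$, $\sigma(\vec\ell)=|\{1\le j\le k-1:\ell_j=\ell_{j+1}\}|$, and $\sigma^{(i)}(\vec\ell)=|\{1\le j\le k-1:\ell_j=\ell_{j+1}=i\}|$. Define $\theta_{\infty;k}(\vec t)=\sum_{\vec\ell\in\mathcal M_{\infty,k}}w(\vec\ell)\prod_{i\ge1}t_i^{\sigma^{(i)}(\vec\ell)}$ and $\theta_{\infty;k}(t)=\sum_{\vec\ell\in\mathcal M_{\infty,k}}w(\vec\ell)t^{\sigma(\vec\ell)}$, with value $1$ for $k=0$. *)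

From Stdlib Require Export Reals List Arith.
Export ListNotations.
Open Scope R_scope.

Definition Complex : Type := (R * R)%type.
Definition RtoC (x : R) : Complex := (x, 0).
Definition C0 : Complex := (0, 0).
Definition C1 : Complex := (1, 0).
Definition Cadd (z w : Complex) : Complex := (fst z + fst w, snd z + snd w).
Definition Copp (z : Complex) : Complex := (- fst z, - snd z).
Definition Csub (z w : Complex) : Complex := Cadd z (Copp w).
Definition Cmul (z w : Complex) : Complex :=
  (fst z * fst w - snd z * snd w, fst z * snd w + snd z * fst w).
Definition Cinv (z : Complex) : Complex :=
  let d := fst z * fst z + snd z * snd z in (fst z / d, - snd z / d).
Definition Cdiv (z w : Complex) : Complex := Cmul z (Cinv w).
Definition Cnorm (z : Complex) : R := sqrt (fst z * fst z + snd z * snd z).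
Fixpoint Cpow (z : Complex) (n : nat) : Complex :=
  match n with O => C1 | S n => Cmul z (Cpow z n) end.
Definition Cexp (z : Complex) : Complex := (exp (fst z) * cos (snd z), exp (fst z) * sin (snd z)).

Definition Ccv (u : nat -> Complex) (l : Complex) : Prop :=
  Un_cv (fun n => Cnorm (Csub (u n) l)) 0.
Fixpoint Csum_upto (f : nat -> Complex) (n : nat) : Complex :=
  match n with O => f O | S n => Cadd (Csum_upto f n) (f (S n)) end.
Fixpoint Cprod_upto (f : nat -> Complex) (n : nat) : Complex :=
  match n with O => f O | S n => Cmul (Cprod_upto f n) (f (S n)) end.
Definition Cseries_cv (f : nat -> Complex) (S : Complex) : Prop := Ccv (Csum_upto f) S.
Definition Cseries_abs_conv (f : nat -> Complex) : Prop :=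
  exists s : R, Un_cv (sum_f_R0 (fun i => Cnorm (f i))) s.

Fixpoint allLists (N k : nat) : list (list nat) :=
  match k with
  | O => [ [] ]
  | S k => flat_map (fun x => map (cons x) (allLists N k)) (seq 1 N)
  end.
Fixpoint noninc (l : list nat) : bool :=
  match l with
  | x :: ((y :: _) as r) => andb (Nat.leb y x) (noninc r)
  | _ => true
  end.
(* M_{N,k} = elements of M_{infty,k} with l_1 <= N (a finite set, listed without repetition);
   M_{infty,k} is the increasing union of the M_{N,k}. *)
Definition Mset (N k : nat) : list (list nat) := filter noninc (allLists N k).

Definition weight (a : nat -> R) (l : list nat) : R := fold_right (fun x acc => a x * acc) 1 l.
Fixpoint sigma (l : list nat) : nat :=
  match l with
  | x :: ((y :: _) as r) => (if Nat.eqb x y then 1 else 0) + sigma r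
  | _ => O
  end.
Fixpoint sigma_i (i : nat) (l : list nat) : nat :=
  match l with
  | x :: ((y :: _) as r) => (if andb (Nat.eqb x i) (Nat.eqb y i) then 1 else 0) + sigma_i i r
  | _ => O
  end.
Definition maxl (l : list nat) : nat := fold_right Nat.max O l.
Definition Cprod_list (l : list Complex) : Complex := fold_right Cmul C1 l.
Definition Csum_list (l : list Complex) : Complex := fold_right Cadd C0 l.

(* summand of theta_{infty;k}(vec t): w(l) prod_{i>=1} t_i^{sigma^{(i)}(l)};
   factors with i > max l are t_i^0 = 1 and are omitted *)
Definition term_vec (a : nat -> R) (t : nat -> Complex) (l : list nat) : Complex :=
  Cmul (RtoC (weight a l)) (Cprod_list (map (fun i => Cpow (t i) (sigma_i i l)) (seq 1 (maxl l)))).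
(* summand of theta_{infty;k}(t): w(l) t^{sigma(l)} *)
Definition term_sc (a : nat -> R) (t : Complex) (l : list nat) : Complex :=
  Cmul (RtoC (weight a l)) (Cpow t (sigma l)).

Definition thetaN (term : list nat -> Complex) (N k : nat) : Complex := Csum_list (map term (Mset N k)).
(* absolute convergence of sum_{l in M_{infty,k}} term l : the sums of |term l| over the
   finite exhausting sets M_{N,k} are bounded *)
Definition theta_abs_conv (term : list nat -> Complex) (k : nat) : Prop :=
  exists B : R, forall N : nat, fold_right Rplus 0 (map (fun l => Cnorm (term l)) (Mset N k)) <= B.

Definition GF_conclusion (a : nat -> R) (t : nat -> Complex) (term : list nat -> Complex)
  (zdom : Complex -> Prop) : Prop :=
  exists th : nat -> Complex,
    (* th k = theta_{infty;k}, an absolutely convergent series *)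
    (forall k : nat, theta_abs_conv term k /\ Ccv (fun N => thetaN term N k) (th k)) /\
    forall z : Complex, zdom z ->
      Cseries_abs_conv (fun k => Cmul (th k) (Cpow z k)) /\
      exists Sum : Complex,
        Cseries_cv (fun k => Cmul (th k) (Cpow z k)) Sum /\
        Ccv (Cprod_upto (fun i =>
               let m := S i in
               Cadd C1 (Cdiv (Cmul (RtoC (a m)) z)
                             (Csub C1 (Cmul (Cmul (RtoC (a m)) z) (t m)))))) Sum /\
        exists (inner : nat -> Complex) (L : Complex),
          (forall j : nat, (1 <= j)%nat ->
             Cseries_cv (fun i => let m := S i in
                Cmul (RtoC (a m ^ j)) (Csub (Cpow (t m) j) (Cpow (Csub (t m) C1) j))) (inner j)) /\
          Cseries_cv (fun i => let j := S i in
                Cmul (Cdiv (Cpow z j) (RtoC (INR j))) (inner j)) L /\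
          Sum = Cexp L.

(* Every list l_1 >= ... >= l_k with entries in {1,...,N+1} is, uniquely, a block of n
   copies of N+1 followed by such a list with entries in {1,...,N}; both summands,
   w(l) prod_i t_i^{sigma^{(i)}(l)} and w(l) t^{sigma(l)}, factor along this splitting, the
   block contributing c_{N+1}(n) = a_{N+1}^n t_{N+1}^{n-1} (and 1 when n = 0).  Hence the
   truncations theta_{N;k} (sums over M_{N,k}) satisfy a convolution recursion in N, and
   since sum_n c_m(n) z^n = 1 + a_m z/(1 - a_m z t_m), the truncated generating function
   sum_k theta_{N;k} z^k is the finite product of these factors over m <= N (Cauchy
   products).  The same recursion for the sums of |summands| gives, for rho M (1+T) < 1,
   the bound sum_{M_{N,k}} |summand| <= rho^-k prod_m (1 + a_m rho/(1 - a_m rho T))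
   <= rho^-k exp(s rho/(1 - M rho T)), uniform in N.  It yields the absolute convergence of
   each theta_{infty;k}, and a geometric domination under which Tannery's theorem lets
   N -> infinity.  For the exponential form each factor is exp(L(a_m z t_m) -
   L(a_m z (t_m - 1))), where L(w) = sum_j w^j/j satisfies exp(L(w)) (1 - w) = 1 (shown by
   differentiating along the segment [0,w]); Tannery's theorem again exchanges the sums
   over j and m. *)

From Pilot Require Import Defs.
From Stdlib Require Import Reals Lra Lia Permutation FinFun.
From Coquelicot Require Import Coquelicot.
Import Pilot.Defs.
Open Scope R_scope.

Lemma Complex_ext (x y : Complex) : fst x = fst y -> snd x = snd y -> x = y.
Proof. destruct x, y; simpl; intros; subst; reflexivity. Qed.

Ltac cring :=
  repeat match goal with x : Complex |- _ => destruct x end;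
  unfold Csub, Cadd, Copp, Cmul, C0, C1, RtoC in *; simpl in *;
  apply Complex_ext; simpl; ring.

Lemma Complex_ring : ring_theory C0 C1 Cadd Cmul Csub Copp (@eq Complex).
Proof. constructor; intros; cring. Qed.
Add Ring Cring : Complex_ring.

Lemma Complex_field : field_theory C0 C1 Cadd Cmul Csub Copp Cdiv Cinv (@eq Complex).
Proof.
  constructor.
  - exact Complex_ring.
  - unfold C1, C0; intro H; inversion H; lra.
  - reflexivity.
  - intros [x y] Hz.
    assert (Hd : x * x + y * y <> 0).
    { intro E. apply Hz. assert (x = 0) by nra. assert (y = 0) by nra. subst; reflexivity. }
    unfold Cinv, Cmul, C1; simpl; apply Complex_ext; simpl; field; auto.
Qed.
Add Field Cfield : Complex_field.

Lemma RtoC_mul x y : RtoC (x * y) = Cmul (RtoC x) (RtoC y).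
Proof. unfold RtoC, Cmul; apply Complex_ext; simpl; ring. Qed.
Lemma RtoC_add x y : RtoC (x + y) = Cadd (RtoC x) (RtoC y).
Proof. unfold RtoC, Cadd; apply Complex_ext; simpl; ring. Qed.
Lemma RtoC_pow x n : RtoC (x ^ n) = Cpow (RtoC x) n.
Proof. induction n; simpl. reflexivity. rewrite RtoC_mul, IHn; reflexivity. Qed.
Lemma RtoC_inv c : c <> 0 -> Cinv (RtoC c) = RtoC (/ c).
Proof. intro H. unfold Cinv, RtoC; simpl. apply Complex_ext; simpl; field; auto. Qed.
Lemma Cpow_mul z w n : Cpow (Cmul z w) n = Cmul (Cpow z n) (Cpow w n).
Proof. induction n; simpl. cring. rewrite IHn; ring. Qed.
Lemma Cpow_add z n m : Cpow z (n + m) = Cmul (Cpow z n) (Cpow z m).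
Proof. induction n; simpl. ring. rewrite IHn; ring. Qed.

Lemma Cnorm_ge0 z : 0 <= Cnorm z.
Proof. apply sqrt_pos. Qed.

Lemma Cnorm_mul z w : Cnorm (Cmul z w) = Cnorm z * Cnorm w.
Proof.
  destruct z as [x y], w as [u v]; unfold Cnorm, Cmul; simpl.
  rewrite <- sqrt_mult by nra. f_equal; ring.
Qed.

Lemma Cnorm_fst z : Rabs (fst z) <= Cnorm z.
Proof.
  destruct z as [x y]; unfold Cnorm; simpl.
  rewrite <- sqrt_Rsqr_abs. apply sqrt_le_1_alt. unfold Rsqr; nra.
Qed.

Lemma Cnorm_snd z : Rabs (snd z) <= Cnorm z.
Proof.
  destruct z as [x y]; unfold Cnorm; simpl.
  rewrite <- sqrt_Rsqr_abs. apply sqrt_le_1_alt. unfold Rsqr; nra.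
Qed.

Lemma Cnorm_le_components z : Cnorm z <= Rabs (fst z) + Rabs (snd z).
Proof.
  destruct z as [x y]; unfold Cnorm; simpl.
  pose proof (Rabs_pos x); pose proof (Rabs_pos y).
  rewrite <- (sqrt_square (Rabs x + Rabs y)) by lra.
  apply sqrt_le_1_alt.
  assert (Ex : x * x = Rabs x * Rabs x) by (rewrite <- Rabs_mult, Rabs_pos_eq; nra).
  assert (Ey : y * y = Rabs y * Rabs y) by (rewrite <- Rabs_mult, Rabs_pos_eq; nra).
  nra.
Qed.

Lemma Cnorm_triangle z w : Cnorm (Cadd z w) <= Cnorm z + Cnorm w.
Proof.
  destruct z as [x y], w as [u v]; unfold Cnorm, Cadd; simpl.
  set (A := x*x+y*y). set (B := u*u+v*v).
  assert (HA : 0 <= A) by (unfold A; nra). assert (HB : 0 <= B) by (unfold B; nra).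
  pose proof (sqrt_pos A); pose proof (sqrt_pos B).
  rewrite <- (sqrt_square (sqrt A + sqrt B)) by lra.
  apply sqrt_le_1_alt.
  (* Cauchy-Schwarz in R^2 *)
  assert (CS : Rabs (x*u+y*v) <= sqrt A * sqrt B).
  { rewrite <- sqrt_mult by auto. rewrite <- sqrt_Rsqr_abs. apply sqrt_le_1_alt.
    unfold Rsqr, A, B. pose proof (Rle_0_sqr (x*v-y*u)). unfold Rsqr in *. nra. }
  pose proof (Rle_abs (x*u+y*v)).
  replace ((sqrt A + sqrt B) * (sqrt A + sqrt B)) with
    (sqrt A * sqrt A + sqrt B * sqrt B + 2 * (sqrt A * sqrt B)) by ring.
  rewrite !sqrt_sqrt by auto.
  replace ((x+u)*(x+u)+(y+v)*(y+v)) with (A + B + 2*(x*u+y*v)) by (unfold A, B; ring).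
  lra.
Qed.

Lemma Cnorm_RtoC x : Cnorm (RtoC x) = Rabs x.
Proof. unfold Cnorm, RtoC; simpl. rewrite <- sqrt_Rsqr_abs. f_equal. unfold Rsqr; ring. Qed.
Lemma Cnorm_C1 : Cnorm C1 = 1.
Proof. change C1 with (RtoC 1). rewrite Cnorm_RtoC. apply Rabs_R1. Qed.
Lemma Cnorm_C0 : Cnorm C0 = 0.
Proof. change C0 with (RtoC 0). rewrite Cnorm_RtoC. apply Rabs_R0. Qed.
Lemma Cnorm_pow z n : Cnorm (Cpow z n) = Cnorm z ^ n.
Proof. induction n; simpl. apply Cnorm_C1. rewrite Cnorm_mul, IHn; reflexivity. Qed.
Lemma Cnorm_opp z : Cnorm (Copp z) = Cnorm z.
Proof. destruct z; unfold Cnorm, Copp; simpl. f_equal; ring. Qed.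
Lemma Cnorm_sub_sym z w : Cnorm (Csub z w) = Cnorm (Csub w z).
Proof. replace (Csub z w) with (Copp (Csub w z)) by ring. apply Cnorm_opp. Qed.
Lemma Cnorm_triangle_sub z w : Cnorm (Csub z w) <= Cnorm z + Cnorm w.
Proof. unfold Csub. rewrite <- (Cnorm_opp w). apply Cnorm_triangle. Qed.
Lemma Cnorm_reverse_triangle z w : Cnorm z - Cnorm w <= Cnorm (Csub z w).
Proof.
  pose proof (Cnorm_triangle (Csub z w) w) as H.
  replace (Cadd (Csub z w) w) with z in H by ring. lra.
Qed.

Lemma one_minus_neq0 w : Cnorm w < 1 -> Csub C1 w <> C0.
Proof.
  intros H E. pose proof (Cnorm_reverse_triangle C1 w) as H'.
  rewrite E, Cnorm_C0, Cnorm_C1 in H'. lra.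
Qed.

Lemma Cnorm_div_INR z j : (1 <= j)%nat -> Cnorm (Cdiv z (RtoC (INR j))) <= Cnorm z.
Proof.
  intro Hj. assert (1 <= INR j) by (apply (le_INR 1); lia).
  unfold Cdiv. rewrite RtoC_inv by lra. rewrite Cnorm_mul, Cnorm_RtoC.
  rewrite Rabs_pos_eq by (apply Rlt_le, Rinv_0_lt_compat; lra).
  assert (/ INR j <= 1) by (rewrite <- Rinv_1; apply Rinv_le_contravar; lra).
  pose proof (Cnorm_ge0 z). pose proof (Rinv_0_lt_compat (INR j) ltac:(lra)). nra.
Qed.

Lemma lim_le_const (u : nat -> R) l B : Un_cv u l -> (forall n, u n <= B) -> l <= B.
Proof.
  intros H HB. apply is_lim_seq_Reals in H.
  exact (is_lim_seq_le u (fun _ => B) l B HB H (is_lim_seq_const B)).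
Qed.

Lemma exp_le_compat x y : x <= y -> exp x <= exp y.
Proof. intros [H|H]; [left; apply exp_increasing; auto | subst; lra]. Qed.

Lemma cauchy_by_majorant (u A : nat -> R) : ex_finite_lim_seq A ->
  (forall n m, (n <= m)%nat -> Rabs (u m - u n) <= A m - A n) -> ex_finite_lim_seq u.
Proof.
  intros HA Hu. apply ex_lim_seq_cauchy_corr. apply ex_lim_seq_cauchy_corr in HA.
  intro eps. destruct (HA eps) as [N HN]. exists N. intros n m Hn Hm.
  destruct (le_lt_dec n m) as [Hnm|Hnm].
  - specialize (Hu n m Hnm). specialize (HN m n Hm Hn). rewrite Rabs_minus_sym.
    eapply Rle_lt_trans; [exact Hu|]. eapply Rle_lt_trans; [apply Rle_abs|exact HN].
  - specialize (Hu m n ltac:(lia)). specialize (HN n m Hn Hm).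
    eapply Rle_lt_trans; [exact Hu|]. eapply Rle_lt_trans; [apply Rle_abs|exact HN].
Qed.

Lemma Ccv_components u l : Ccv u l <->
  Un_cv (fun n => fst (u n)) (fst l) /\ Un_cv (fun n => snd (u n)) (snd l).
Proof.
  unfold Ccv, Un_cv, R_dist. split.
  - intro H; split; intros e He; destruct (H e He) as [N HN]; exists N; intros n Hn;
      specialize (HN n Hn); rewrite Rminus_0_r, Rabs_pos_eq in HN by apply Cnorm_ge0;
      eapply Rle_lt_trans; try exact HN.
    + apply (Cnorm_fst (Csub (u n) l)).
    + apply (Cnorm_snd (Csub (u n) l)).
  - intros [H1 H2] e He.
    destruct (H1 (e/2)) as [N1 HN1]; [lra|]. destruct (H2 (e/2)) as [N2 HN2]; [lra|].
    exists (max N1 N2); intros n Hn.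
    specialize (HN1 n ltac:(lia)). specialize (HN2 n ltac:(lia)).
    rewrite Rminus_0_r, Rabs_pos_eq by apply Cnorm_ge0.
    eapply Rle_lt_trans; [apply Cnorm_le_components|].
    destruct (u n), l; unfold Csub, Cadd, Copp in *; simpl in *. unfold Rminus in *. lra.
Qed.

Lemma Ccv_unique u l1 l2 : Ccv u l1 -> Ccv u l2 -> l1 = l2.
Proof.
  rewrite !Ccv_components; intros [A1 B1] [A2 B2].
  apply Complex_ext; eapply UL_sequence; eauto.
Qed.

Lemma Ccv_ext u v l : (forall n, u n = v n) -> Ccv u l -> Ccv v l.
Proof.
  intros E H e He; destruct (H e He) as [N HN]; exists N; intros; rewrite <- E; auto.
Qed.

Lemma Ccv_const c : Ccv (fun _ => c) c.
Proof.
  intros e He; exists O; intros. unfold R_dist.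
  replace (Csub c c) with C0 by ring. rewrite Cnorm_C0, Rminus_0_r, Rabs_R0; lra.
Qed.

Lemma Ccv_add u v l1 l2 : Ccv u l1 -> Ccv v l2 -> Ccv (fun n => Cadd (u n) (v n)) (Cadd l1 l2).
Proof. rewrite !Ccv_components; intros [A1 B1] [A2 B2]; split; apply CV_plus; auto. Qed.

Lemma Ccv_sub u v l1 l2 : Ccv u l1 -> Ccv v l2 -> Ccv (fun n => Csub (u n) (v n)) (Csub l1 l2).
Proof.
  rewrite !Ccv_components; intros [A1 B1] [A2 B2]; split; simpl; apply CV_plus;
    auto; apply CV_opp; auto.
Qed.

Lemma Ccv_mul u v l1 l2 : Ccv u l1 -> Ccv v l2 -> Ccv (fun n => Cmul (u n) (v n)) (Cmul l1 l2).
Proof.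
  rewrite !Ccv_components; intros [A1 B1] [A2 B2]; split; simpl;
    [apply CV_minus | apply CV_plus]; apply CV_mult; auto.
Qed.

Lemma Ccv_norm0 u : Un_cv (fun n => Cnorm (u n)) 0 -> Ccv u C0.
Proof.
  intros H e He; destruct (H e He) as [N HN]; exists N; intros n Hn; specialize (HN n Hn).
  unfold R_dist in *. replace (Csub (u n) C0) with (u n) by ring. auto.
Qed.

Lemma Ccv_norm u l : Ccv u l -> Un_cv (fun n => Cnorm (u n)) (Cnorm l).
Proof.
  intros H e He; destruct (H e He) as [N HN]; exists N; intros n Hn; specialize (HN n Hn).
  unfold R_dist in *. rewrite Rminus_0_r, Rabs_pos_eq in HN by apply Cnorm_ge0.
  eapply Rle_lt_trans; [|exact HN]. apply Rabs_le; split.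
  - pose proof (Cnorm_reverse_triangle l (u n)). rewrite Cnorm_sub_sym in H0. lra.
  - pose proof (Cnorm_reverse_triangle (u n) l). lra.
Qed.

Lemma Ccv_norm_le u l B : Ccv u l -> (forall n, Cnorm (u n) <= B) -> Cnorm l <= B.
Proof. intros H HB. exact (lim_le_const _ _ _ (Ccv_norm _ _ H) HB). Qed.

Lemma Ccv_shift u l : Ccv u l <-> Ccv (fun n => u (S n)) l.
Proof.
  split; intros H e He; destruct (H e He) as [N HN].
  - exists N; intros n Hn. apply HN; lia.
  - exists (S N); intros n Hn. destruct n; [lia|]. apply HN; lia.
Qed.

Lemma Csum_upto_fst f n : fst (Csum_upto f n) = sum_f_R0 (fun i => fst (f i)) n.
Proof. induction n; simpl; auto. rewrite IHn; reflexivity. Qed.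
Lemma Csum_upto_snd f n : snd (Csum_upto f n) = sum_f_R0 (fun i => snd (f i)) n.
Proof. induction n; simpl; auto. rewrite IHn; reflexivity. Qed.
Lemma Csum_upto_add f g n :
  Csum_upto (fun k => Cadd (f k) (g k)) n = Cadd (Csum_upto f n) (Csum_upto g n).
Proof. induction n; simpl; auto. rewrite IHn; ring. Qed.
Lemma Csum_upto_sub f g n :
  Csum_upto (fun k => Csub (f k) (g k)) n = Csub (Csum_upto f n) (Csum_upto g n).
Proof. induction n; simpl; auto. rewrite IHn; ring. Qed.
Lemma Csum_upto_scal c f n : Csum_upto (fun k => Cmul c (f k)) n = Cmul c (Csum_upto f n).
Proof. induction n; simpl; auto. rewrite IHn; ring. Qed.
Lemma Csum_upto_ext f g n :
  (forall k, (k <= n)%nat -> f k = g k) -> Csum_upto f n = Csum_upto g n.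
Proof. induction n; simpl; intros; auto. rewrite IHn, H; auto. Qed.
Lemma Csum_upto_norm f n : Cnorm (Csum_upto f n) <= sum_f_R0 (fun k => Cnorm (f k)) n.
Proof. induction n; simpl. lra. eapply Rle_trans; [apply Cnorm_triangle|lra]. Qed.
Lemma Csum_upto_RtoC g n : Csum_upto (fun k => RtoC (g k)) n = RtoC (sum_f_R0 g n).
Proof. induction n; simpl; auto. rewrite IHn, RtoC_add; reflexivity. Qed.
Lemma Csum_upto_first f k :
  Csum_upto f (S k) = Cadd (f O) (Csum_upto (fun n => f (S n)) k).
Proof. induction k; simpl in *. ring. rewrite IHk. ring. Qed.

Lemma is_series_Un_cv a l : is_series a l <-> Un_cv (sum_f_R0 a) l.
Proof. rewrite is_series_Reals. unfold infinite_sum, Un_cv. tauto. Qed.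

Lemma Cseries_cv_components f S : Cseries_cv f S <->
  is_series (fun n => fst (f n)) (fst S) /\ is_series (fun n => snd (f n)) (snd S).
Proof.
  unfold Cseries_cv. rewrite Ccv_components, !is_series_Un_cv.
  split; intros [A B]; split; eapply Un_cv_ext; try eassumption; intro n;
    first [apply Csum_upto_fst | symmetry; apply Csum_upto_fst
          | apply Csum_upto_snd | symmetry; apply Csum_upto_snd].
Qed.

(* The sum of a complex series, computed componentwise (meaningful when it converges). *)
Definition CSeries (f : nat -> Complex) : Complex :=
  (Series (fun n => fst (f n)), Series (fun n => snd (f n))).
Definition Cex_series (f : nat -> Complex) : Prop :=
  ex_series (fun n => fst (f n)) /\ ex_series (fun n => snd (f n)).

Lemma CSeries_correct f : Cex_series f -> Cseries_cv f (CSeries f).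
Proof. intros [A B]. apply Cseries_cv_components; split; apply Series_correct; auto. Qed.

Lemma Cseries_unique f S : Cseries_cv f S -> S = CSeries f.
Proof.
  intro H; apply Cseries_cv_components in H as [A B].
  unfold CSeries; apply Complex_ext; simpl; symmetry; apply is_series_unique; auto.
Qed.

Lemma Cseries_Cex f S : Cseries_cv f S -> Cex_series f.
Proof. intro H; apply Cseries_cv_components in H as [A B]; split; eexists; eauto. Qed.

Lemma ex_series_Rabs_le (a b : nat -> R) :
  (forall n, Rabs (a n) <= b n) -> ex_series b -> ex_series a.
Proof. intros H Hb. apply (@ex_series_le R_AbsRing R_CompleteNormedModule _ b); auto. Qed.

Lemma Cex_series_le f g : (forall n, Cnorm (f n) <= g n) -> ex_series g -> Cex_series f.
Proof.
  intros H Hg; split; apply (ex_series_Rabs_le _ g); auto; intro n;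
    eapply Rle_trans; try apply H; [apply Cnorm_fst | apply Cnorm_snd].
Qed.

Lemma Cabs_conv_ex_series f : Cseries_abs_conv f <-> ex_series (fun n => Cnorm (f n)).
Proof. unfold Cseries_abs_conv. split; intros [s H]; exists s; apply is_series_Un_cv; auto. Qed.

Lemma Cseries_ext f g S : (forall n, f n = g n) -> Cseries_cv f S -> Cseries_cv g S.
Proof. intros E H; eapply Ccv_ext; [|exact H]; intro n; apply Csum_upto_ext; auto. Qed.

Lemma Cseries_add f g A B : Cseries_cv f A -> Cseries_cv g B ->
  Cseries_cv (fun n => Cadd (f n) (g n)) (Cadd A B).
Proof.
  intros; eapply Ccv_ext; [|apply Ccv_add; eauto]; intro n; simpl; rewrite Csum_upto_add; auto.
Qed.

Lemma Cseries_sub f g A B : Cseries_cv f A -> Cseries_cv g B ->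
  Cseries_cv (fun n => Csub (f n) (g n)) (Csub A B).
Proof.
  intros; eapply Ccv_ext; [|apply Ccv_sub; eauto]; intro n; simpl; rewrite Csum_upto_sub; auto.
Qed.

Lemma Cseries_scal c f A : Cseries_cv f A -> Cseries_cv (fun n => Cmul c (f n)) (Cmul c A).
Proof.
  intros; eapply Ccv_ext; [|apply Ccv_mul; [apply Ccv_const|eauto]].
  intro n; simpl; rewrite Csum_upto_scal; auto.
Qed.

Lemma Cseries_cons c g S : Cseries_cv g S ->
  Cseries_cv (fun n => match n with O => c | S n' => g n' end) (Cadd c S).
Proof.
  intro H. apply Ccv_shift. eapply Ccv_ext; [|apply Ccv_add; [apply Ccv_const|exact H]].
  intro n. rewrite Csum_upto_first. reflexivity.
Qed.

Lemma Cseries_geom q : Cnorm q < 1 -> Cseries_cv (Cpow q) (Cinv (Csub C1 q)).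
Proof.
  intro Hq. pose proof (one_minus_neq0 q Hq) as Hnz.
  assert (E : forall n, Csum_upto (Cpow q) n =
                        Cmul (Csub C1 (Cpow q (S n))) (Cinv (Csub C1 q))).
  { induction n; simpl Csum_upto; [|rewrite IHn]; simpl; field; auto. }
  assert (Hpow : Ccv (fun n => Cpow q (S n)) C0).
  { apply Ccv_norm0. apply (Un_cv_ext (fun n => Cnorm q ^ S n));
      [intro n; symmetry; apply Cnorm_pow|].
    apply is_lim_seq_Reals. apply (is_lim_seq_incr_1 (fun n => Cnorm q ^ n)).
    apply is_lim_seq_geom. rewrite Rabs_pos_eq by apply Cnorm_ge0; auto. }
  unfold Cseries_cv. eapply Ccv_ext; [intro n; symmetry; apply E|].
  assert (H : Ccv (fun n => Cmul (Csub C1 (Cpow q (S n))) (Cinv (Csub C1 q)))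
                  (Cmul (Csub C1 C0) (Cinv (Csub C1 q)))).
  { apply Ccv_mul; [apply Ccv_sub; [apply Ccv_const|exact Hpow]|apply Ccv_const]. }
  replace (Cmul (Csub C1 C0) _) with (Cinv (Csub C1 q)) in H by ring. exact H.
Qed.

(* Real instances of Coquelicot's linearity of series, usable by plain [apply]. *)
Lemma is_series_minus_R (a b : nat -> R) la lb : is_series a la -> is_series b lb ->
  is_series (fun n => a n - b n) (la - lb).
Proof. intros; apply (is_series_minus a b la lb); auto. Qed.
Lemma is_series_plus_R (a b : nat -> R) la lb : is_series a la -> is_series b lb ->
  is_series (fun n => a n + b n) (la + lb).
Proof. intros; apply (is_series_plus a b la lb); auto. Qed.

Lemma Cseries_cauchy_product x y X Y : Cseries_cv x X -> Cseries_cv y Y ->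
  ex_series (fun n => Cnorm (x n)) -> ex_series (fun n => Cnorm (y n)) ->
  Cseries_cv (fun k => Csum_upto (fun n => Cmul (x n) (y (k - n)%nat)) k) (Cmul X Y).
Proof.
  intros Hx Hy Ax Ay.
  apply Cseries_cv_components in Hx as [Hx1 Hx2]. apply Cseries_cv_components in Hy as [Hy1 Hy2].
  assert (Habs : forall f, ex_series (fun n => Cnorm (f n)) ->
            ex_series (fun n => Rabs (fst (f n))) /\ ex_series (fun n => Rabs (snd (f n)))).
  { intros f Hf; split; refine (ex_series_Rabs_le _ _ _ Hf); intro n;
      rewrite Rabs_Rabsolu; [apply Cnorm_fst | apply Cnorm_snd]. }
  destruct (Habs x Ax) as [Ax1 Ax2], (Habs y Ay) as [Ay1 Ay2].
  apply Cseries_cv_components; split; simpl.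
  - apply (is_series_ext (fun k => sum_f_R0 (fun n => fst (x n) * fst (y (k-n)%nat)) k
        - sum_f_R0 (fun n => snd (x n) * snd (y (k-n)%nat)) k)).
    + intro n; rewrite Csum_upto_fst, <- minus_sum; reflexivity.
    + apply is_series_minus_R.
      * apply (is_series_mult (fun n => fst (x n)) (fun n => fst (y n))); auto.
      * apply (is_series_mult (fun n => snd (x n)) (fun n => snd (y n))); auto.
  - apply (is_series_ext (fun k => sum_f_R0 (fun n => fst (x n) * snd (y (k-n)%nat)) k
        + sum_f_R0 (fun n => snd (x n) * fst (y (k-n)%nat)) k)).
    + intro n; rewrite Csum_upto_snd, <- plus_sum; reflexivity.
    + apply is_series_plus_R.
      * apply (is_series_mult (fun n => fst (x n)) (fun n => snd (y n))); auto.
      * apply (is_series_mult (fun n => snd (x n)) (fun n => fst (y n))); auto.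
Qed.

(** * Tannery's theorem *)

Lemma series_tail_bound (w U : nat -> R) K :
  (forall k, Rabs (w k) <= U k) -> ex_series U ->
  Rabs (Series w - sum_f_R0 w K) <= Series U - sum_f_R0 U K.
Proof.
  intros Hw HU.
  assert (Ew : ex_series (fun k => Rabs (w k))).
  { apply (ex_series_Rabs_le _ U); auto. intro; rewrite Rabs_Rabsolu; auto. }
  rewrite (Series_incr_n w (S K)), (Series_incr_n U (S K)) by
    (auto; lia || apply ex_series_Rabs; auto).
  simpl pred.
  replace (sum_f_R0 w K + Series (fun k => w (S K + k)%nat) - sum_f_R0 w K)
    with (Series (fun k => w (S K + k)%nat)) by ring.
  replace (sum_f_R0 U K + Series (fun k => U (S K + k)%nat) - sum_f_R0 U K)
    with (Series (fun k => U (S K + k)%nat)) by ring.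
  eapply Rle_trans; [apply Series_Rabs; apply (ex_series_incr_n (fun k => Rabs (w k)) (S K)); auto|].
  apply Series_le; [intro n; split; [apply Rabs_pos|apply Hw]|].
  apply (ex_series_incr_n U (S K)); auto.
Qed.

Lemma tannery (u : nat -> nat -> R) (v U : nat -> R) :
  (forall k, Un_cv (fun N => u N k) (v k)) -> (forall N k, Rabs (u N k) <= U k) ->
  ex_series U -> Un_cv (fun N => Series (u N)) (Series v).
Proof.
  intros Hc Hd HU.
  assert (Hv : forall k, Rabs (v k) <= U k).
  { intro k. apply (lim_le_const (fun N => Rabs (u N k))); auto. apply cv_cvabs; auto. }
  assert (Hfin : forall K, Un_cv (fun N => sum_f_R0 (u N) K) (sum_f_R0 v K)).
  { induction K; simpl; auto. apply CV_plus; auto. }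
  intros e He.
  destruct (proj1 (is_series_Un_cv U (Series U)) (Series_correct U HU) (e/4))
    as [K HK]; [lra|].
  specialize (HK K (le_n _)). unfold R_dist in HK.
  assert (Htail : Series U - sum_f_R0 U K < e/4)
    by (rewrite Rabs_minus_sym in HK; apply Rabs_lt_between in HK; lra).
  destruct (Hfin K (e/4)) as [N0 HN0]; [lra|].
  exists N0; intros N HN. specialize (HN0 N HN). unfold R_dist in *.
  pose proof (series_tail_bound (u N) U K (Hd N) HU) as Tu.
  pose proof (series_tail_bound v U K Hv HU) as Tv.
  replace (Series (u N) - Series v) with
    ((Series (u N) - sum_f_R0 (u N) K) - (Series v - sum_f_R0 v K)
     + (sum_f_R0 (u N) K - sum_f_R0 v K)) by ring.
  eapply Rle_lt_trans; [apply Rabs_triang|].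
  eapply Rle_lt_trans; [apply Rplus_le_compat_r, Rabs_triang|].
  rewrite Rabs_Ropp. lra.
Qed.

Lemma Ctannery (u : nat -> nat -> Complex) (v : nat -> Complex) (U : nat -> R) :
  (forall k, Ccv (fun N => u N k) (v k)) -> (forall N k, Cnorm (u N k) <= U k) ->
  ex_series U -> Ccv (fun N => CSeries (u N)) (CSeries v).
Proof.
  intros Hc Hd HU. apply Ccv_components; split; simpl.
  - apply (tannery (fun N k => fst (u N k)) (fun k => fst (v k)) U); auto.
    + intro k; apply Ccv_components; auto.
    + intros; eapply Rle_trans; [apply Cnorm_fst|auto].
  - apply (tannery (fun N k => snd (u N k)) (fun k => snd (v k)) U); auto.
    + intro k; apply Ccv_components; auto.
    + intros; eapply Rle_trans; [apply Cnorm_snd|auto].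
Qed.

(** * The sets M_{N,k} and their splitting by the multiplicity of the largest value *)

Lemma NoDup_flat_map_disjoint {A B} (g : A -> list B) L :
  NoDup L -> (forall x, In x L -> NoDup (g x)) ->
  (forall x y z, In x L -> In y L -> x <> y -> In z (g x) -> ~ In z (g y)) ->
  NoDup (flat_map g L).
Proof.
  induction L as [|x L IH]; simpl; intros HL Hg Hd. constructor.
  inversion HL; subst. apply NoDup_app; auto.
  - apply IH; auto. intros; apply (Hd x0 y); auto.
  - intros z Hz Hin. apply in_flat_map in Hin as [y [Hy Hz']].
    apply (Hd x y z); auto. intro; subst; auto.
Qed.

Lemma In_allLists N k l :
  In l (allLists N k) <-> length l = k /\ Forall (fun x => (1 <= x <= N)%nat) l.
Proof.
  revert l; induction k; intro l; simpl.
  - split. intros [<-|[]]; split; auto. intros [Hl _]; destruct l; [auto|discriminate].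
  - rewrite in_flat_map. split.
    + intros [x [Hx Hl]]. apply in_seq in Hx. apply in_map_iff in Hl as [l' [<- Hl']].
      apply IHk in Hl' as [Hlen HF]. split; simpl; auto. constructor; auto; lia.
    + intros [Hlen HF]. destruct l as [|x l']; [discriminate|]. inversion HF; subst.
      exists x; split; [apply in_seq; lia|]. apply in_map. apply IHk; split; auto.
Qed.

Lemma NoDup_allLists N k : NoDup (allLists N k).
Proof.
  induction k; simpl. constructor; [auto|constructor].
  apply NoDup_flat_map_disjoint. apply seq_NoDup.
  - intros; apply Injective_map_NoDup; auto. intros a b E; injection E; auto.
  - intros x y z _ _ Hxy Hx Hy. apply in_map_iff in Hx as [l1 [<- _]].
    apply in_map_iff in Hy as [l2 [E _]]. injection E; intros; subst; auto.
Qed.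

Definition multiset_list (N : nat) (l : list nat) : Prop :=
  Forall (fun x => (1 <= x <= N)%nat) l /\ noninc l = true.

Lemma In_Mset N k l : In l (Mset N k) <-> length l = k /\ multiset_list N l.
Proof. unfold Mset, multiset_list. rewrite filter_In, In_allLists. tauto. Qed.

Lemma NoDup_Mset N k : NoDup (Mset N k).
Proof. apply NoDup_filter, NoDup_allLists. Qed.

Lemma Mset_0 k : Mset 0 k = match k with O => cons nil nil | S _ => nil end.
Proof. destruct k; reflexivity. Qed.

Lemma noninc_cons_inv x l : noninc (x :: l) = true ->
  noninc l = true /\ Forall (fun y => (y <= x)%nat) l.
Proof.
  revert x; induction l as [|y l IH]; intros x H. split; auto.
  simpl in H. apply andb_prop in H as [H1 H2]. apply Nat.leb_le in H1.
  destruct (IH y H2) as [_ HF]. split; [exact H2|]. constructor; [exact H1|].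
  eapply Forall_impl; [|exact HF]. intros b Hb; simpl in *. lia.
Qed.

Lemma noninc_cons x l : noninc l = true -> Forall (fun y => (y <= x)%nat) l ->
  noninc (x :: l) = true.
Proof.
  destruct l as [|y l]; simpl; auto. intros H HF. inversion HF; subst.
  rewrite H. apply Nat.leb_le in H2. rewrite H2. reflexivity.
Qed.

Lemma multiset_list_notin N l : multiset_list N l -> ~ In (S N) l.
Proof. intros [HF _] Hin. rewrite Forall_forall in HF. specialize (HF _ Hin). lia. Qed.

Lemma multiset_list_split N l : multiset_list (S N) l ->
  exists n l', l = repeat (S N) n ++ l' /\ multiset_list N l'.
Proof.
  induction l as [|x l IH]; intros [HF Hn].
  - exists O, nil; split; auto. split; auto.
  - inversion HF; subst. destruct (noninc_cons_inv x l Hn) as [Hn' Hle].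
    destruct (IH (conj H2 Hn')) as [n [l' [E Hl']]].
    destruct (Nat.eq_dec x (S N)) as [Ex|Ex].
    + subst. exists (S n), l'; split; auto.
    + exists O, (x :: l); split; auto. split; [|auto].
      constructor; [lia|]. rewrite Forall_forall in Hle, H2 |- *. intros y Hy.
      specialize (Hle y Hy). specialize (H2 y Hy). lia.
Qed.

Lemma multiset_list_join N n l' : multiset_list N l' ->
  multiset_list (S N) (repeat (S N) n ++ l').
Proof.
  intros [HF Hn].
  assert (Hle : Forall (fun y => (y <= S N)%nat) l')
    by (eapply Forall_impl; [|exact HF]; intros ? ?; simpl in *; lia).
  split.
  - apply Forall_app; split.
    + apply Forall_forall; intros y Hy; apply repeat_spec in Hy; lia.
    + eapply Forall_impl; [|exact HF]; intros ? ?; simpl in *; lia.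
  - induction n; simpl; auto. apply noninc_cons; auto.
    apply Forall_app; split; auto.
    apply Forall_forall; intros y Hy; apply repeat_spec in Hy; lia.
Qed.

Lemma repeat_app_inj (x : nat) n1 n2 l1 l2 : repeat x n1 ++ l1 = repeat x n2 ++ l2 ->
  ~ In x l1 -> ~ In x l2 -> n1 = n2 /\ l1 = l2.
Proof.
  revert n2; induction n1; intros n2 E H1 H2; destruct n2; simpl in E.
  - auto.
  - exfalso; apply H1; rewrite E; left; auto.
  - exfalso; apply H2; rewrite <- E; left; auto.
  - injection E; intro E'. destruct (IHn1 n2 E' H1 H2); auto.
Qed.

Definition Mset_split (N k : nat) : list (list nat) :=
  flat_map (fun n => map (fun l => repeat (S N) n ++ l) (Mset N (k - n))) (seq 0 (S k)).

Lemma Mset_S_perm N k : Permutation (Mset (S N) k) (Mset_split N k).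
Proof.
  apply NoDup_Permutation. apply NoDup_Mset.
  - apply NoDup_flat_map_disjoint. apply seq_NoDup.
    + intros; apply Injective_map_NoDup; [|apply NoDup_Mset].
      intros l1 l2 E; apply app_inv_head in E; auto.
    + intros x y z _ _ Hxy Hx Hy. apply in_map_iff in Hx as [l1 [<- H1]].
      apply in_map_iff in Hy as [l2 [E H2]]. apply In_Mset in H1, H2.
      apply repeat_app_inj in E;
        [|apply (multiset_list_notin N); tauto|apply (multiset_list_notin N); tauto].
      destruct E; subst; auto.
  - intro l. rewrite In_Mset. unfold Mset_split. rewrite in_flat_map. split.
    + intros [Hlen Hl]. destruct (multiset_list_split N l Hl) as [n [l' [E Hl']]].
      rewrite E, length_app, repeat_length in Hlen.
      exists n. split; [apply in_seq; lia|].
      apply in_map_iff. exists l'; split; auto. apply In_Mset. split; auto. lia.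
    + intros [n [Hn Hl]]. apply in_seq in Hn. apply in_map_iff in Hl as [l' [<- Hl']].
      apply In_Mset in Hl' as [Hlen Hg]. split.
      * rewrite length_app, repeat_length. lia.
      * apply multiset_list_join; auto.
Qed.

Lemma Csum_list_app l1 l2 : Csum_list (l1 ++ l2) = Cadd (Csum_list l1) (Csum_list l2).
Proof. induction l1; simpl. ring. rewrite IHl1; ring. Qed.
Lemma Csum_list_perm l1 l2 : Permutation l1 l2 -> Csum_list l1 = Csum_list l2.
Proof. induction 1; simpl; auto; try ring. rewrite IHPermutation; auto. congruence. Qed.
Lemma Csum_list_flat_map {A} (f : list nat -> Complex) (g : A -> list (list nat)) L :
  Csum_list (map f (flat_map g L)) = Csum_list (map (fun x => Csum_list (map f (g x))) L).
Proof. induction L; simpl; auto. rewrite map_app, Csum_list_app, IHL; auto. Qed.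
Lemma Csum_list_seq h s k :
  Csum_list (map h (seq s (S k))) = Csum_upto (fun n => h (s + n)%nat) k.
Proof.
  induction k. simpl. rewrite Nat.add_0_r; ring.
  rewrite seq_S, map_app, Csum_list_app, IHk. simpl. ring.
Qed.
Lemma Csum_list_scal c (f : list nat -> Complex) L :
  Csum_list (map (fun l => Cmul c (f l)) L) = Cmul c (Csum_list (map f L)).
Proof. induction L; simpl. ring. rewrite IHL; ring. Qed.
Lemma Csum_list_RtoC (g : list nat -> R) L :
  Csum_list (map (fun l => RtoC (g l)) L) = RtoC (fold_right Rplus 0 (map g L)).
Proof. induction L; simpl. reflexivity. rewrite IHL, RtoC_add; reflexivity. Qed.
Lemma Csum_list_norm (f : list nat -> Complex) L :
  Cnorm (Csum_list (map f L)) <= fold_right Rplus 0 (map (fun l => Cnorm (f l)) L).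
Proof.
  induction L; simpl. rewrite Cnorm_C0; lra. eapply Rle_trans; [apply Cnorm_triangle|lra].
Qed.

Lemma sum_Mset_S (f : list nat -> Complex) N k :
  Csum_list (map f (Mset (S N) k)) =
  Csum_upto (fun n => Csum_list (map (fun l => f (repeat (S N) n ++ l)) (Mset N (k - n)))) k.
Proof.
  rewrite (Csum_list_perm _ _ (Permutation_map f (Mset_S_perm N k))).
  unfold Mset_split. rewrite Csum_list_flat_map, Csum_list_seq. simpl.
  apply Csum_upto_ext; intros. rewrite map_map. reflexivity.
Qed.

(** * The summands factor along the splitting *)

Definition block_coeff (a : nat -> R) (t : nat -> Complex) (m n : nat) : Complex :=
  match n with O => C1 | S n' => Cmul (RtoC (a m ^ S n')) (Cpow (t m) n') end.

Definition block_multiplicative (a : nat -> R) (t : nat -> Complex)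
    (term : list nat -> Complex) : Prop :=
  term nil = C1 /\
  forall N l n, multiset_list N l ->
    term (repeat (S N) n ++ l) = Cmul (block_coeff a t (S N) n) (term l).

Lemma weight_app a l1 l2 : weight a (l1 ++ l2) = weight a l1 * weight a l2.
Proof. induction l1; simpl. ring. rewrite IHl1; ring. Qed.
Lemma weight_repeat a x n : weight a (repeat x n) = a x ^ n.
Proof. induction n; simpl; auto. rewrite IHn; ring. Qed.

Lemma sigma_repeat_app (x : nat) n l : ~ In x l ->
  sigma (repeat x (S n) ++ l) = (n + sigma l)%nat.
Proof.
  intro H. induction n as [|n IHn].
  - destruct l as [|y r]; simpl; auto.
    destruct (Nat.eqb_spec x y); [subst; exfalso; apply H; left; auto|]. reflexivity.
  - change (sigma (x :: repeat x (S n) ++ l) = (S n + sigma l)%nat).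
    change (((if Nat.eqb x x then 1 else 0) + sigma (repeat x (S n) ++ l))%nat
            = (S n + sigma l)%nat).
    rewrite IHn, Nat.eqb_refl. lia.
Qed.

Lemma sigma_i_repeat_app (x i : nat) n l : ~ In x l ->
  sigma_i i (repeat x (S n) ++ l) = ((if Nat.eqb x i then n else 0) + sigma_i i l)%nat.
Proof.
  intro H. induction n as [|n IHn].
  - destruct l as [|y r]. simpl; destruct (Nat.eqb x i); reflexivity.
    change (((if andb (Nat.eqb x i) (Nat.eqb y i) then 1 else 0) + sigma_i i (y :: r))%nat
            = ((if Nat.eqb x i then 0 else 0) + sigma_i i (y :: r))%nat).
    destruct (Nat.eqb x i) eqn:E1, (Nat.eqb y i) eqn:E2; simpl; try lia.
    apply Nat.eqb_eq in E1, E2. exfalso; apply H; simpl; left; congruence.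
  - change (((if andb (Nat.eqb x i) (Nat.eqb x i) then 1 else 0)
             + sigma_i i (repeat x (S n) ++ l))%nat
            = ((if Nat.eqb x i then S n else 0) + sigma_i i l)%nat).
    rewrite IHn. destruct (Nat.eqb x i); simpl; lia.
Qed.

Lemma sigma_i_notin i l : ~ In i l -> sigma_i i l = O.
Proof.
  induction l as [|x l IH]; intro H; simpl; auto. destruct l as [|y r]; auto.
  change (((if andb (Nat.eqb x i) (Nat.eqb y i) then 1 else 0) + sigma_i i (y :: r))%nat = O).
  rewrite IH by (intro; apply H; right; auto).
  destruct (Nat.eqb_spec x i); [subst; exfalso; apply H; left; auto|]. reflexivity.
Qed.

Lemma maxl_ge i l : In i l -> (i <= maxl l)%nat.
Proof.
  induction l; simpl; intro H; [contradiction|].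
  destruct H as [H|H]; [subst; lia|]. specialize (IHl H); lia.
Qed.

Lemma maxl_le N l : multiset_list N l -> (maxl l <= N)%nat.
Proof. intros [HF _]. induction HF; simpl; lia. Qed.

(* prod_{i=1}^K t_i^{sigma^{(i)}(l)}; for K >= max l this is the product in term_vec. *)
Definition coincidence_prod (t : nat -> Complex) (K : nat) (l : list nat) : Complex :=
  Cprod_list (map (fun i => Cpow (t i) (sigma_i i l)) (seq 1 K)).

Lemma coincidence_prod_S t K l :
  coincidence_prod t (S K) l =
  Cmul (coincidence_prod t K l) (Cpow (t (S K)) (sigma_i (S K) l)).
Proof.
  unfold coincidence_prod. rewrite seq_S, map_app.
  assert (Happ : forall L1 L2, Cprod_list (L1 ++ L2) = Cmul (Cprod_list L1) (Cprod_list L2)).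
  { intros L1 L2. induction L1 as [|x L1 IH]; simpl; [ring|rewrite IH; ring]. }
  rewrite Happ. simpl. ring.
Qed.

Lemma coincidence_prod_stable t l K : (maxl l <= K)%nat ->
  coincidence_prod t K l = coincidence_prod t (maxl l) l.
Proof.
  intro HK. induction HK; auto.
  rewrite coincidence_prod_S, IHHK, sigma_i_notin. simpl; ring.
  intro Hin; apply maxl_ge in Hin; lia.
Qed.

Lemma term_vec_multiplicative a t : block_multiplicative a t (term_vec a t).
Proof.
  split; [unfold term_vec; simpl; apply Complex_ext; simpl; ring|].
  intros N l n Hl. destruct n as [|n]; [simpl; ring|].
  pose proof (multiset_list_notin N l Hl) as Hni. pose proof (maxl_le N l Hl) as Hm.
  assert (Hmax : maxl (repeat (S N) (S n) ++ l) = S N).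
  { clear Hni. induction n as [|n IHn]; [change (Nat.max (S N) (maxl l) = S N); lia|].
    change (Nat.max (S N) (maxl (repeat (S N) (S n) ++ l)) = S N). rewrite IHn. lia. }
  unfold term_vec. rewrite weight_app, weight_repeat, Hmax.
  fold (coincidence_prod t (S N) (repeat (S N) (S n) ++ l)).
  fold (coincidence_prod t (maxl l) l).
  rewrite coincidence_prod_S, sigma_i_repeat_app, Nat.eqb_refl, sigma_i_notin by auto.
  (* the coincidences at values i <= N are those of l *)
  replace (coincidence_prod t N (repeat (S N) (S n) ++ l))
    with (coincidence_prod t (maxl l) l).
  - simpl block_coeff. rewrite Nat.add_0_r, RtoC_mul.
    change (a (S N) * a (S N) ^ n) with (a (S N) ^ S n). ring.
  - rewrite <- (coincidence_prod_stable t l N Hm).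
    unfold coincidence_prod. f_equal. apply map_ext_in. intros i Hi. apply in_seq in Hi.
    rewrite sigma_i_repeat_app by auto. destruct (Nat.eqb_spec (S N) i); [lia|]. reflexivity.
Qed.

Lemma term_sc_multiplicative a t : block_multiplicative a (fun _ => t) (term_sc a t).
Proof.
  split; [unfold term_sc; simpl; apply Complex_ext; simpl; ring|].
  intros N l n Hl. destruct n as [|n]; [unfold term_sc; simpl; ring|].
  unfold term_sc. rewrite weight_app, weight_repeat,
    sigma_repeat_app by apply (multiset_list_notin N l Hl).
  simpl block_coeff. rewrite Cpow_add, RtoC_mul.
  change (a (S N) * a (S N) ^ n) with (a (S N) ^ S n). ring.
Qed.

(** * The complex exponential and the series L(w) = sum_{j>=1} w^j/j *)

Lemma Cexp_add x y : Cexp (Cadd x y) = Cmul (Cexp x) (Cexp y).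
Proof.
  destruct x as [x1 x2], y as [y1 y2]; unfold Cexp, Cadd, Cmul; simpl.
  rewrite exp_plus, cos_plus, sin_plus. apply Complex_ext; simpl; ring.
Qed.

Lemma Cexp_0 : Cexp C0 = C1.
Proof. unfold Cexp, C0, C1; simpl. rewrite exp_0, cos_0, sin_0. apply Complex_ext; simpl; ring. Qed.

Lemma Cexp_continuous u l : Ccv u l -> Ccv (fun n => Cexp (u n)) (Cexp l).
Proof.
  rewrite !Ccv_components. intros [H1 H2]. simpl.
  assert (E1 : Un_cv (fun n => exp (fst (u n))) (exp (fst l))).
  { apply (continuity_seq exp); auto. apply derivable_continuous_pt, derivable_pt_exp. }
  assert (E2 : Un_cv (fun n => cos (snd (u n))) (cos (snd l)))
    by (apply (continuity_seq cos); auto; apply continuity_cos).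
  assert (E3 : Un_cv (fun n => sin (snd (u n))) (sin (snd l)))
    by (apply (continuity_seq sin); auto; apply continuity_sin).
  split; apply CV_mult; auto.
Qed.

(* The i-th term w^(i+1)/(i+1) of L(w), its sum, and the real and imaginary coefficient
   sequences of the power series x |-> L(x w) in the real variable x. *)
Definition log_term (w : Complex) (i : nat) : Complex := Cdiv (Cpow w (S i)) (RtoC (INR (S i))).
Definition log_series (w : Complex) : Complex := CSeries (log_term w).
Definition log_coeff_re (w : Complex) (j : nat) : R :=
  match j with O => 0 | S i => fst (log_term w i) end.
Definition log_coeff_im (w : Complex) (j : nat) : R :=
  match j with O => 0 | S i => snd (log_term w i) end.

Lemma log_term_norm w i : Cnorm (log_term w i) <= Cnorm w ^ S i.
Proof. rewrite <- Cnorm_pow. apply Cnorm_div_INR. lia. Qed.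

Lemma log_series_cv w : Cnorm w < 1 ->
  Cseries_cv (log_term w) (log_series w) /\ ex_series (fun i => Cnorm (log_term w i)).
Proof.
  intro Hw. pose proof (Cnorm_ge0 w).
  assert (Hg : ex_series (fun i => Cnorm w ^ S i)).
  { apply ex_series_incr_1 with (a := fun i => Cnorm w ^ i).
    apply ex_series_geom. rewrite Rabs_pos_eq; lra. }
  split.
  - apply CSeries_correct, (Cex_series_le _ _ (log_term_norm w) Hg).
  - refine (ex_series_Rabs_le _ _ _ Hg). intro i.
    rewrite Rabs_pos_eq by apply Cnorm_ge0. apply log_term_norm.
Qed.

Lemma log_coeff_radius w x : Cnorm w < 1 -> Rabs x <= 1 ->
  Rbar_lt (Rabs x) (CV_radius (log_coeff_re w)) /\ Rbar_lt (Rabs x) (CV_radius (log_coeff_im w)).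
Proof.
  intros Hw Hx. pose proof (Cnorm_ge0 w). set (R0 := 2 / (1 + Cnorm w)).
  assert (HR0 : 1 < R0).
  { unfold R0. apply (Rmult_lt_reg_r (1 + Cnorm w)); [lra|].
    unfold Rdiv; rewrite Rmult_assoc, Rinv_l; lra. }
  assert (HwR : Cnorm w * R0 < 1).
  { unfold R0. apply (Rmult_lt_reg_r (1 + Cnorm w)); [lra|]. unfold Rdiv.
    replace (Cnorm w * (2 * / (1 + Cnorm w)) * (1 + Cnorm w)) with (2 * Cnorm w)
      by (field; lra). lra. }
  assert (Hgeo : ex_series (fun n => (Cnorm w * R0) ^ n))
    by (apply ex_series_geom; rewrite Rabs_pos_eq; nra).
  assert (Hl : forall i, Rabs (fst (log_term w i)) <= Cnorm w ^ S i /\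
                         Rabs (snd (log_term w i)) <= Cnorm w ^ S i).
  { intro i. split; eapply Rle_trans;
      [apply Cnorm_fst|apply log_term_norm|apply Cnorm_snd|apply log_term_norm]. }
  assert (HD : CV_disk (log_coeff_re w) R0 /\ CV_disk (log_coeff_im w) R0).
  { split; (eapply ex_series_Rabs_le; [|exact Hgeo]); intro n; simpl;
      rewrite Rabs_Rabsolu, Rabs_mult, (Rabs_pos_eq (R0 ^ n)) by (apply pow_le; lra);
      (destruct n; [simpl; rewrite Rabs_R0; lra|]); simpl log_coeff_re; simpl log_coeff_im;
      rewrite Rpow_mult_distr; apply Rmult_le_compat_r; try (apply pow_le; lra); apply Hl. }
  assert (Hrad : forall c, CV_disk c R0 -> Rbar_le R0 (CV_radius c)).
  { intros c Hc. unfold CV_radius. apply (proj1 (Lub_Rbar_correct (CV_disk c))). auto. }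
  destruct HD as [H1 H2]. apply Hrad in H1, H2.
  split; [destruct (CV_radius (log_coeff_re w)) | destruct (CV_radius (log_coeff_im w))];
    simpl in *; auto; lra.
Qed.

(* The derivative of x |-> L(x w) is w/(1 - x w). *)
Definition log_derivative (w : Complex) (x : R) : Complex :=
  Cmul w (Cinv (Csub C1 (Cmul (RtoC x) w))).

Lemma xw_small w x : Cnorm w < 1 -> Rabs x <= 1 -> Cnorm (Cmul (RtoC x) w) < 1.
Proof.
  intros Hw Hx. rewrite Cnorm_mul, Cnorm_RtoC. pose proof (Cnorm_ge0 w). pose proof (Rabs_pos x). nra.
Qed.

Lemma log_derivative_eq w x : Cnorm w < 1 -> Rabs x <= 1 ->
  Cmul (log_derivative w x) (Csub C1 (Cmul (RtoC x) w)) = w.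
Proof.
  intros Hw Hx. pose proof (one_minus_neq0 _ (xw_small w x Hw Hx)).
  unfold log_derivative. field; auto.
Qed.

Lemma log_derivative_series w x : Cnorm w < 1 -> Rabs x <= 1 ->
  PSeries (PS_derive (log_coeff_re w)) x = fst (log_derivative w x) /\
  PSeries (PS_derive (log_coeff_im w)) x = snd (log_derivative w x).
Proof.
  intros Hw Hx.
  assert (HD : Cseries_cv (fun n => Cmul (RtoC (x ^ n)) (Cpow w (S n))) (log_derivative w x)).
  { pose proof (Cseries_scal w _ _ (Cseries_geom _ (xw_small w x Hw Hx))) as H.
    eapply Cseries_ext; [|exact H]. intro n. simpl. rewrite Cpow_mul, <- RtoC_pow. ring. }
  assert (Hcoef : forall n, PS_derive (log_coeff_re w) n = fst (Cpow w (S n)) /\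
                            PS_derive (log_coeff_im w) n = snd (Cpow w (S n))).
  { intro n. unfold PS_derive, log_coeff_re, log_coeff_im, log_term, Cdiv.
    assert (INR (S n) <> 0) by (apply not_0_INR; lia).
    rewrite RtoC_inv by auto. destruct (Cpow w (S n)) as [c1 c2]. simpl. split; field; auto. }
  apply Cseries_cv_components in HD as [H1 H2].
  unfold PSeries. split; apply is_series_unique; eapply is_series_ext; try eassumption; intro n;
    rewrite (proj1 (Hcoef n)) || rewrite (proj2 (Hcoef n));
    simpl; destruct (Cpow w n) as [c1 c2]; destruct w; simpl; ring.
Qed.

Lemma log_series_at_1 w : Cnorm w < 1 ->
  PSeries (log_coeff_re w) 1 = fst (log_series w) /\ PSeries (log_coeff_im w) 1 = snd (log_series w).
Proof.
  intro Hw. destruct (log_series_cv w Hw) as [Hs _]. apply Cseries_Cex in Hs as [H1 H2].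
  unfold PSeries. split;
    rewrite Series_ext with (b := fun n => _) by (intro; rewrite pow1, Rmult_1_r; reflexivity);
    rewrite Series_incr_1; simpl; try ring; apply ex_series_incr_1; auto.
Qed.

Lemma log_path_derivative w x : Cnorm w < 1 -> 0 <= x <= 1 ->
  let P := PSeries (log_coeff_re w) in let Q := PSeries (log_coeff_im w) in
  ex_derive P x /\ ex_derive Q x /\
  Derive P x * (1 - x * fst w) + Derive Q x * (x * snd w) = fst w /\
  - (Derive P x * (x * snd w)) + Derive Q x * (1 - x * fst w) = snd w.
Proof.
  intros Hw Hx P Q. assert (Hax : Rabs x <= 1) by (rewrite Rabs_pos_eq; lra).
  destruct (log_coeff_radius w x Hw Hax) as [R1 R2].
  destruct (log_derivative_series w x Hw Hax) as [V1 V2].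
  pose proof (log_derivative_eq w x Hw Hax) as E.
  unfold P, Q. rewrite !Derive_PSeries, V1, V2 by auto.
  destruct (log_derivative w x) as [d1 d2], w as [w1 w2].
  unfold Cmul, Csub, Cadd, Copp, C1, RtoC in E; simpl in E. injection E; intros E2 E1.
  simpl. repeat split; try (apply ex_derive_PSeries; auto); nra.
Qed.

(* exp(L(w)) (1 - w) = 1 for |w| < 1: the real and imaginary parts of
   exp(P + iQ)(1 - x w) have zero derivative on [0,1] by log_path_derivative;
   comparing x = 0 and x = 1 gives the claim. *)
Lemma exp_log_series w : Cnorm w < 1 -> Cmul (Cexp (log_series w)) (Csub C1 w) = C1.
Proof.
  intro Hw. pose proof (log_path_derivative w) as Hd. destruct w as [w1 w2]. simpl in Hd.
  set (P := PSeries (log_coeff_re (w1, w2))) in *. set (Q := PSeries (log_coeff_im (w1, w2))) in *.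
  set (hr := fun x => exp (P x) * cos (Q x) * (1 - x * w1) + exp (P x) * sin (Q x) * (x * w2)).
  set (hi := fun x => - (exp (P x) * cos (Q x) * (x * w2)) + exp (P x) * sin (Q x) * (1 - x * w1)).
  assert (Dr : forall x, 0 <= x <= 1 -> is_derive hr x zero).
  { intros x Hx. destruct (Hd x Hw Hx) as (e1 & e2 & r1 & r2).
    unfold hr. auto_derive; [tauto|].
    change (Derive (fun x0 => P x0) x) with (Derive P x).
    change (Derive (fun x0 => Q x0) x) with (Derive Q x).
    transitivity (exp (P x) * cos (Q x) * (Derive P x * (1 - x * w1) + Derive Q x * (x * w2) - w1)
      + exp (P x) * sin (Q x) * (w2 - (- (Derive P x * (x * w2)) + Derive Q x * (1 - x * w1)))).
    - ring.
    - rewrite r1, r2. unfold zero; simpl. ring. }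
  assert (Di : forall x, 0 <= x <= 1 -> is_derive hi x zero).
  { intros x Hx. destruct (Hd x Hw Hx) as (e1 & e2 & r1 & r2).
    unfold hi. auto_derive; [tauto|].
    change (Derive (fun x0 => P x0) x) with (Derive P x).
    change (Derive (fun x0 => Q x0) x) with (Derive Q x).
    transitivity (exp (P x) * cos (Q x) * ((- (Derive P x * (x * w2)) + Derive Q x * (1 - x * w1)) - w2)
      + exp (P x) * sin (Q x) * (Derive P x * (1 - x * w1) + Derive Q x * (x * w2) - w1)).
    - ring.
    - rewrite r1, r2. unfold zero; simpl. ring. }
  pose proof (eq_is_derive hr 0 1 Dr Rlt_0_1) as Er.
  pose proof (eq_is_derive hi 0 1 Di Rlt_0_1) as Ei.
  assert (P0 : P 0 = 0) by (unfold P; rewrite PSeries_0; reflexivity).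
  assert (Q0 : Q 0 = 0) by (unfold Q; rewrite PSeries_0; reflexivity).
  destruct (log_series_at_1 (w1, w2) Hw) as [P1 Q1]. fold P in P1. fold Q in Q1.
  unfold hr, hi in Er, Ei. rewrite P0, Q0, P1, Q1, exp_0, cos_0, sin_0 in *.
  destruct (log_series (w1, w2)) as [L1 L2]. cbn [fst snd] in *.
  unfold Cexp, Cmul, Csub, Cadd, Copp, C1. apply Complex_ext; cbn [fst snd]; lra.
Qed.

(** * The generating function of a block-multiplicative family *)

Definition abs_thetaN (term : list nat -> Complex) (N k : nat) : R :=
  fold_right Rplus 0 (map (fun l => Cnorm (term l)) (Mset N k)).

Definition theta_inf (term : list nat -> Complex) (k : nat) : Complex :=
  (real (Lim_seq (fun N => fst (thetaN term N k))), real (Lim_seq (fun N => snd (thetaN term N k)))).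

Definition euler_factor (a : nat -> R) (t : nat -> Complex) (z : Complex) (m : nat) : Complex :=
  Cadd C1 (Cdiv (Cmul (RtoC (a m)) z) (Csub C1 (Cmul (Cmul (RtoC (a m)) z) (t m)))).
Fixpoint euler_prod (a : nat -> R) (t : nat -> Complex) (z : Complex) (N : nat) : Complex :=
  match N with O => C1 | S N' => Cmul (euler_prod a t z N') (euler_factor a t z (S N')) end.

Definition majorant_factor (a : nat -> R) (T rho : R) (m : nat) : R :=
  1 + a m * rho / (1 - a m * rho * T).
Fixpoint majorant_prod (a : nat -> R) (T rho : R) (N : nat) : R :=
  match N with O => 1 | S N' => majorant_prod a T rho N' * majorant_factor a T rho (S N') end.

Lemma Cprod_upto_euler_prod a t z N :
  Cprod_upto (fun i => euler_factor a t z (S i)) N = euler_prod a t z (S N).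
Proof. induction N; simpl; [ring|]. simpl in IHN. rewrite IHN. reflexivity. Qed.

(* L(a_m z t_m) - L(a_m z (t_m - 1)), a logarithm of the m-th factor (exp_log_factor). *)
Definition log_factor (a : nat -> R) (t : nat -> Complex) (z : Complex) (m : nat) : Complex :=
  Csub (log_series (Cmul (Cmul (RtoC (a m)) z) (t m)))
       (log_series (Cmul (Cmul (RtoC (a m)) z) (Csub (t m) C1))).

Definition power_term (a : nat -> R) (t : nat -> Complex) (j m : nat) : Complex :=
  Cmul (RtoC (a m ^ j)) (Csub (Cpow (t m) j) (Cpow (Csub (t m) C1) j)).
Definition power_sum (a : nat -> R) (t : nat -> Complex) (j : nat) : Complex :=
  CSeries (fun i => power_term a t j (S i)).
Definition exponent_term (a : nat -> R) (t : nat -> Complex) (z : Complex) (i : nat) : Complex :=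
  Cmul (Cdiv (Cpow z (S i)) (RtoC (INR (S i)))) (power_sum a t (S i)).

Section GeneratingFunction.

Variables (a : nat -> R) (t : nat -> Complex) (s M T : R).
Hypothesis a_pos : forall m, (1 <= m)%nat -> 0 < a m.
Hypothesis a_summable : Un_cv (sum_f_R0 (fun i => a (S i))) s.
Hypothesis a_le_M : forall m, (1 <= m)%nat -> a m <= M.
Hypothesis t_le_T : forall m, (1 <= m)%nat -> Cnorm (t m) <= T.

Lemma M_pos : 0 < M.
Proof. pose proof (a_pos 1 (le_n _)); pose proof (a_le_M 1 (le_n _)); lra. Qed.

Lemma T_nonneg : 0 <= T.
Proof. pose proof (t_le_T 1 (le_n _)); pose proof (Cnorm_ge0 (t 1%nat)); lra. Qed.

Lemma a_partial_le m : sum_f_R0 (fun i => a (S i)) m <= s.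
Proof. apply (sum_incr _ _ _ a_summable). intro n. left; apply a_pos; lia. Qed.

Lemma disc_bounds rho m : 0 <= rho -> rho * M * (1 + T) < 1 -> (1 <= m)%nat ->
  0 <= a m * rho * T /\ a m * rho * T <= M * rho * T /\ M * rho * T < 1 /\
  a m * rho * (1 + T) < 1.
Proof.
  intros Hr Hrm Hm. pose proof (a_pos m Hm). pose proof (a_le_M m Hm). pose proof T_nonneg.
  assert (0 <= a m * rho) by nra. assert (a m * rho <= M * rho) by nra.
  repeat split; nra.
Qed.

Lemma block_coeff_norm m n : (1 <= m)%nat ->
  Cnorm (block_coeff a t m n) <= match n with O => 1 | S n' => a m ^ S n' * T ^ n' end.
Proof.
  intro Hm. pose proof (a_pos m Hm). destruct n; unfold block_coeff.
  - rewrite Cnorm_C1; lra.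
  - rewrite Cnorm_mul, Cnorm_RtoC, Cnorm_pow, Rabs_pos_eq by (apply pow_le; lra).
    apply Rmult_le_compat_l; [apply pow_le; lra|].
    apply pow_incr; split; [apply Cnorm_ge0|auto].
Qed.

Lemma block_series z m : Cnorm z * M * (1 + T) < 1 -> (1 <= m)%nat ->
  Cseries_cv (fun n => Cmul (block_coeff a t m n) (Cpow z n)) (euler_factor a t z m) /\
  ex_series (fun n => Cnorm (Cmul (block_coeff a t m n) (Cpow z n))).
Proof.
  intros Hz Hm. pose proof (Cnorm_ge0 z) as Hz0. pose proof (a_pos m Hm).
  destruct (disc_bounds (Cnorm z) m Hz0 Hz Hm) as (Hq0 & _ & _ & Hq).
  pose proof T_nonneg. assert (Haz : 0 <= a m * Cnorm z) by nra. split.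
  - set (w := Cmul (Cmul (RtoC (a m)) z) (t m)).
    assert (Hw : Cnorm w < 1).
    { unfold w. rewrite !Cnorm_mul, Cnorm_RtoC, Rabs_pos_eq by lra.
      pose proof (Rmult_le_compat_l (a m * Cnorm z) _ _ Haz (t_le_T m Hm)). lra. }
    pose proof (Cseries_cons C1 _ _
                  (Cseries_scal (Cmul (RtoC (a m)) z) _ _ (Cseries_geom w Hw))) as Hs.
    eapply Cseries_ext; [|exact Hs]. intro n. destruct n; simpl; [ring|].
    unfold w. rewrite Cpow_mul, Cpow_mul, <- RtoC_pow. rewrite RtoC_mul. ring.
  - apply (ex_series_Rabs_le _ (fun n => (a m * Cnorm z * (1 + T)) ^ n)).
    + intro n. rewrite Rabs_pos_eq by apply Cnorm_ge0. rewrite Cnorm_mul, Cnorm_pow.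
      eapply Rle_trans; [apply Rmult_le_compat_r;
                          [apply pow_le; auto|apply (block_coeff_norm m n Hm)]|].
      destruct n; [simpl; lra|].
      rewrite !Rpow_mult_distr.
      assert (T ^ n <= (1 + T) ^ S n).
      { apply Rle_trans with ((1 + T) ^ n); [apply pow_incr; lra|].
        simpl. pose proof (pow_le (1+T) n ltac:(lra)). nra. }
      assert (0 <= a m ^ S n * Cnorm z ^ S n) by (apply Rmult_le_pos; apply pow_le; lra).
      nra.
    + apply ex_series_geom. rewrite Rabs_pos_eq; lra.
Qed.

Lemma block_majorant rho m K : 0 <= rho -> rho * M * (1 + T) < 1 -> (1 <= m)%nat ->
  sum_f_R0 (fun n => Cnorm (block_coeff a t m n) * rho ^ n) K <= majorant_factor a T rho m.
Proof.
  intros Hr Hrm Hm. destruct (disc_bounds rho m Hr Hrm Hm) as (Hq0 & _ & _ & Hq1).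
  pose proof (a_pos m Hm). pose proof T_nonneg. assert (0 <= a m * rho) by nra.
  assert (Hq : a m * rho * T < 1) by nra.
  set (q := a m * rho * T) in *.
  (* the partial geometric sum, computed exactly *)
  assert (Hg : forall K, sum_f_R0 (fun n => Cnorm (block_coeff a t m n) * rho ^ n) K <=
                  1 + a m * rho / (1 - q) - a m * rho * q ^ K / (1 - q)).
  { induction K0.
    - simpl. rewrite Cnorm_C1. unfold Rdiv. rewrite Rmult_1_r. lra.
    - rewrite tech5. eapply Rle_trans; [apply Rplus_le_compat_l|].
      + apply Rmult_le_compat_r; [apply pow_le; auto|]. apply (block_coeff_norm m (S K0) Hm).
      + replace (a m ^ S K0 * T ^ K0 * rho ^ S K0) with (a m * rho * q ^ K0)
          by (unfold q; rewrite !Rpow_mult_distr; simpl; ring).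
        assert (a m * rho * q ^ K0 - a m * rho * q ^ K0 / (1 - q)
                = - (a m * rho * q ^ S K0 / (1 - q))) by (simpl; field; lra).
        lra. }
  eapply Rle_trans; [apply Hg|]. unfold majorant_factor. fold q.
  assert (0 <= a m * rho * q ^ K / (1 - q)).
  { apply Rmult_le_pos; [apply Rmult_le_pos; [nra|apply pow_le; auto]|].
    apply Rlt_le, Rinv_0_lt_compat; lra. }
  lra.
Qed.

Lemma majorant_factor_ge1 rho m : 0 <= rho -> rho * M * (1 + T) < 1 -> (1 <= m)%nat ->
  1 <= majorant_factor a T rho m.
Proof.
  intros Hr Hrm Hm. destruct (disc_bounds rho m Hr Hrm Hm) as (Hq0 & _ & _ & Hq1).
  pose proof (a_pos m Hm). pose proof T_nonneg. unfold majorant_factor.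
  assert (0 <= a m * rho / (1 - a m * rho * T)).
  { apply Rmult_le_pos; [nra|]. apply Rlt_le, Rinv_0_lt_compat; nra. }
  lra.
Qed.

Lemma majorant_prod_ge1 rho N : 0 <= rho -> rho * M * (1 + T) < 1 ->
  1 <= majorant_prod a T rho N.
Proof.
  intros Hr Hrm. induction N; simpl; [lra|].
  pose proof (majorant_factor_ge1 rho (S N) Hr Hrm ltac:(lia)). nra.
Qed.

(* prod_m (1 + a_m rho/(1 - a_m rho T)) <= exp(s rho/(1 - M rho T)), by 1 + x <= e^x. *)
Lemma majorant_prod_bound rho N : 0 <= rho -> rho * M * (1 + T) < 1 ->
  majorant_prod a T rho N <= exp (s * (rho / (1 - M * rho * T))).
Proof.
  intros Hr Hrm.
  set (c := rho / (1 - M * rho * T)).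
  assert (Hfac : forall m, (1 <= m)%nat -> majorant_factor a T rho m <= exp (a m * c)).
  { intros m Hm. destruct (disc_bounds rho m Hr Hrm Hm) as (Hq0 & Hq & HMq & _).
    eapply Rle_trans; [|apply exp_ineq1_le]. unfold majorant_factor, c, Rdiv.
    rewrite Rmult_assoc. apply Rplus_le_compat_l, Rmult_le_compat_l; [left; apply a_pos; auto|].
    apply Rmult_le_compat_l; [auto|]. apply Rinv_le_contravar; lra. }
  assert (Hc : 0 <= c).
  { destruct (disc_bounds rho 1 Hr Hrm (le_n _)) as (_ & _ & HMq & _).
    apply Rmult_le_pos; [auto|]. apply Rlt_le, Rinv_0_lt_compat; lra. }
  assert (Hpartial : forall N, majorant_prod a T rho (S N) <=
                               exp (c * sum_f_R0 (fun i => a (S i)) N)).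
  { induction N0.
    - change (1 * majorant_factor a T rho 1 <= exp (c * a 1%nat)).
      rewrite Rmult_1_l, Rmult_comm. apply Hfac; lia.
    - change (majorant_prod a T rho (S N0) * majorant_factor a T rho (S (S N0))
              <= exp (c * (sum_f_R0 (fun i => a (S i)) N0 + a (S (S N0))))).
      rewrite Rmult_plus_distr_l, exp_plus.
      apply Rmult_le_compat; [pose proof (majorant_prod_ge1 rho (S N0) Hr Hrm); lra|
                              pose proof (majorant_factor_ge1 rho (S (S N0)) Hr Hrm ltac:(lia)); lra|
                              exact IHN0|].
      rewrite Rmult_comm. apply Hfac; lia. }
  eapply Rle_trans with (majorant_prod a T rho (S N)).
  { simpl. pose proof (majorant_prod_ge1 rho N Hr Hrm).
    pose proof (majorant_factor_ge1 rho (S N) Hr Hrm ltac:(lia)). nra. }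
  eapply Rle_trans; [apply Hpartial|]. apply exp_le_compat.
  rewrite (Rmult_comm s). apply Rmult_le_compat_l; [auto|apply a_partial_le].
Qed.

Section Summands.

Variable term : list nat -> Complex.
Hypothesis term_mult : block_multiplicative a t term.

Lemma thetaN_S N k :
  thetaN term (S N) k = Csum_upto (fun n => Cmul (block_coeff a t (S N) n) (thetaN term N (k - n))) k.
Proof.
  destruct term_mult as [_ Hf]. unfold thetaN. rewrite sum_Mset_S. apply Csum_upto_ext; intros n _.
  rewrite <- Csum_list_scal. f_equal. apply map_ext_in. intros l Hl.
  apply In_Mset in Hl. apply Hf; tauto.
Qed.

Lemma abs_thetaN_S N k : abs_thetaN term (S N) k =
  sum_f_R0 (fun n => Cnorm (block_coeff a t (S N) n) * abs_thetaN term N (k - n)) k.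
Proof.
  destruct term_mult as [_ Hf].
  assert (RtoC_inj : forall x y, RtoC x = RtoC y -> x = y) by (intros x y H; injection H; auto).
  apply RtoC_inj. unfold abs_thetaN. rewrite <- Csum_list_RtoC, <- Csum_upto_RtoC.
  rewrite (sum_Mset_S (fun l => RtoC (Cnorm (term l)))). apply Csum_upto_ext; intros n _.
  rewrite RtoC_mul, <- Csum_list_RtoC, <- Csum_list_scal. f_equal. apply map_ext_in.
  intros l Hl. apply In_Mset in Hl. rewrite Hf by tauto. rewrite Cnorm_mul, RtoC_mul. reflexivity.
Qed.

(* Initial values: only the empty list lies in M_0. *)
Lemma thetaN_0 k : thetaN term 0 k = match k with O => C1 | S _ => C0 end.
Proof. destruct term_mult as [H0 _]. unfold thetaN. rewrite Mset_0. destruct k; simpl; auto. rewrite H0; ring. Qed.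

Lemma abs_thetaN_0 k : abs_thetaN term 0 k = match k with O => 1 | S _ => 0 end.
Proof.
  destruct term_mult as [H0 _]. unfold abs_thetaN. rewrite Mset_0.
  destruct k; simpl; auto. rewrite H0, Cnorm_C1; ring.
Qed.

Lemma thetaN_le N k : Cnorm (thetaN term N k) <= abs_thetaN term N k.
Proof. apply Csum_list_norm. Qed.

Lemma abs_thetaN_coeff_bound rho N k : 0 <= rho -> rho * M * (1 + T) < 1 ->
  abs_thetaN term N k * rho ^ k <= majorant_prod a T rho N.
Proof.
  intros Hr Hrm. revert k. induction N; intro k.
  - rewrite abs_thetaN_0. destruct k; simpl; lra.
  - rewrite abs_thetaN_S, Rmult_comm, scal_sum. simpl majorant_prod.
    apply Rle_trans with
      (sum_f_R0 (fun n => Cnorm (block_coeff a t (S N) n) * rho ^ n * majorant_prod a T rho N) k).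
    + apply sum_Rle; intros n Hn.
      replace (Cnorm (block_coeff a t (S N) n) * abs_thetaN term N (k - n) * rho ^ k)
        with (Cnorm (block_coeff a t (S N) n) * rho ^ n * (abs_thetaN term N (k - n) * rho ^ (k - n)))
        by (replace (rho ^ k) with (rho ^ n * rho ^ (k - n))
              by (rewrite <- pow_add; f_equal; lia); ring).
      apply Rmult_le_compat_l; [apply Rmult_le_pos; [apply Cnorm_ge0|apply pow_le; auto]|].
      apply IHN.
    + rewrite <- scal_sum. apply Rmult_le_compat_l.
      * pose proof (majorant_prod_ge1 rho N Hr Hrm); lra.
      * apply block_majorant; auto; lia.
Qed.

Lemma abs_thetaN_bound rho N k : 0 <= rho -> rho * M * (1 + T) < 1 ->
  abs_thetaN term N k * rho ^ k <= exp (s * (rho / (1 - M * rho * T))).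
Proof.
  intros Hr Hrm. eapply Rle_trans; [apply abs_thetaN_coeff_bound|apply majorant_prod_bound]; auto.
Qed.

Lemma thetaN_increment N k :
  Cnorm (Csub (thetaN term (S N) k) (thetaN term N k))
  <= abs_thetaN term (S N) k - abs_thetaN term N k.
Proof.
  rewrite thetaN_S, abs_thetaN_S. destruct k.
  - simpl. replace (Csub (Cmul C1 (thetaN term N 0)) (thetaN term N 0)) with C0 by ring.
    rewrite Cnorm_C0, Cnorm_C1. lra.
  - (* the n = 0 term of the convolution is theta_N itself *)
    rewrite Csum_upto_first, decomp_sum by lia. simpl pred.
    replace (S k - 0)%nat with (S k) by lia. simpl (block_coeff a t (S N) 0).
    rewrite Cnorm_C1.
    set (X := Csum_upto _ k). set (Y := sum_f_R0 _ k).
    replace (Csub (Cadd (Cmul C1 (thetaN term N (S k))) X) (thetaN term N (S k))) with X by ring.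
    replace (1 * abs_thetaN term N (S k) + Y - abs_thetaN term N (S k)) with Y by ring.
    eapply Rle_trans; [apply Csum_upto_norm|]. apply sum_Rle; intros.
    rewrite Cnorm_mul. apply Rmult_le_compat_l; [apply Cnorm_ge0|apply thetaN_le].
Qed.

Lemma thetaN_cauchy k n m : (n <= m)%nat ->
  Cnorm (Csub (thetaN term m k) (thetaN term n k)) <= abs_thetaN term m k - abs_thetaN term n k.
Proof.
  induction 1.
  - replace (Csub (thetaN term n k) (thetaN term n k)) with C0 by ring. rewrite Cnorm_C0; lra.
  - replace (Csub (thetaN term (S m) k) (thetaN term n k)) with
      (Cadd (Csub (thetaN term (S m) k) (thetaN term m k))
            (Csub (thetaN term m k) (thetaN term n k))) by ring.
    eapply Rle_trans; [apply Cnorm_triangle|]. pose proof (thetaN_increment m k). lra.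
Qed.

Lemma abs_thetaN_bounded k : exists B, forall N, abs_thetaN term N k <= B.
Proof.
  pose proof M_pos. pose proof T_nonneg.
  set (rho := / (2 * M * (1 + T))).
  assert (Hr : 0 < rho) by (unfold rho; apply Rinv_0_lt_compat; nra).
  assert (Hrm : rho * M * (1 + T) < 1).
  { unfold rho. replace (/ (2 * M * (1 + T)) * M * (1 + T)) with (/2) by (field; lra). lra. }
  exists (exp (s * (rho / (1 - M * rho * T))) / rho ^ k). intro N.
  pose proof (abs_thetaN_bound rho N k (Rlt_le _ _ Hr) Hrm).
  assert (0 < rho ^ k) by (apply pow_lt; auto).
  apply (Rmult_le_reg_r (rho ^ k)); auto. unfold Rdiv. rewrite Rmult_assoc, Rinv_l by lra. lra.
Qed.

(* theta_{N;k} -> theta_{infty;k}: it is Cauchy since its majorant is monotone and bounded. *)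
Lemma thetaN_cv k : Ccv (fun N => thetaN term N k) (theta_inf term k).
Proof.
  destruct (abs_thetaN_bounded k) as [B HB].
  assert (HA : ex_finite_lim_seq (fun N => abs_thetaN term N k)).
  { apply (ex_finite_lim_seq_incr _ B); auto. intro N.
    pose proof (thetaN_increment N k). pose proof (Cnorm_ge0 (Csub (thetaN term (S N) k) (thetaN term N k))). lra. }
  apply Ccv_components; split; simpl; apply is_lim_seq_Reals, Lim_seq_correct';
    apply (cauchy_by_majorant _ _ HA); intros n m Hnm;
    eapply Rle_trans; try apply (thetaN_cauchy k n m Hnm).
  - apply (Cnorm_fst (Csub _ _)).
  - apply (Cnorm_snd (Csub _ _)).
Qed.

(* Uniform geometric domination of the coefficients of the truncated generating functions,
   obtained from the majorant bound on a slightly larger radius. *)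
Lemma thetaN_geometric_bound z : Cnorm z * M * (1 + T) < 1 ->
  exists B q, 0 <= q < 1 /\ forall N k, Cnorm (Cmul (thetaN term N k) (Cpow z k)) <= B * q ^ k.
Proof.
  intros Hz. pose proof M_pos. pose proof T_nonneg.
  set (r := Cnorm z). assert (Hr0 : 0 <= r) by apply Cnorm_ge0.
  set (R1 := / (M * (1 + T))).
  assert (HR1 : 0 < R1) by (apply Rinv_0_lt_compat; nra).
  assert (Hi : r < R1).
  { apply (Rmult_lt_reg_r (M * (1 + T))); [nra|]. unfold R1. rewrite Rinv_l by nra. unfold r; lra. }
  set (rho := (r + R1) / 2).
  assert (Hrho : 0 < rho) by (unfold rho; lra).
  assert (Hrm : rho * M * (1 + T) < 1).
  { assert (Hlt : rho < R1) by (unfold rho; lra).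
    apply (Rmult_lt_compat_r (M * (1 + T))) in Hlt; [|nra]. unfold R1 in Hlt.
    rewrite Rinv_l in Hlt by nra. lra. }
  exists (exp (s * (rho / (1 - M * rho * T)))), (r / rho). split.
  - split; [apply Rmult_le_pos; [auto|apply Rlt_le, Rinv_0_lt_compat; auto]|].
    apply (Rmult_lt_reg_r rho); auto. unfold Rdiv; rewrite Rmult_assoc, Rinv_l by lra.
    unfold rho; lra.
  - intros N k. rewrite Cnorm_mul, Cnorm_pow. fold r.
    eapply Rle_trans; [apply Rmult_le_compat_r; [apply pow_le; auto|apply thetaN_le]|].
    replace (r ^ k) with (rho ^ k * (r / rho) ^ k)
      by (rewrite <- Rpow_mult_distr; f_equal; field; lra).
    rewrite <- Rmult_assoc. apply Rmult_le_compat_r.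
    + apply pow_le, Rmult_le_pos; [auto|apply Rlt_le, Rinv_0_lt_compat; auto].
    + apply abs_thetaN_bound; lra.
Qed.

Lemma gf_truncated z N : Cnorm z * M * (1 + T) < 1 ->
  Cseries_cv (fun k => Cmul (thetaN term N k) (Cpow z k)) (euler_prod a t z N).
Proof.
  intros Hz. destruct (thetaN_geometric_bound z Hz) as (B & q & Hq & HB).
  induction N.
  - (* only k = 0 contributes *)
    unfold Cseries_cv. apply Ccv_shift. eapply Ccv_ext; [|apply Ccv_const].
    intro n. induction n.
    + simpl. rewrite (thetaN_0 1), (thetaN_0 0). simpl. ring.
    + change (Csum_upto (fun k => Cmul (thetaN term 0 k) (Cpow z k)) (S (S n))) with
        (Cadd (Csum_upto (fun k => Cmul (thetaN term 0 k) (Cpow z k)) (S n))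
              (Cmul (thetaN term 0 (S (S n))) (Cpow z (S (S n))))).
      rewrite IHn, (thetaN_0 (S (S n))). ring.
  - (* Cauchy product of the block series of N+1 with the truncation at N *)
    destruct (block_series z (S N) Hz ltac:(lia)) as [Hc Hca].
    assert (Hex : ex_series (fun k => Cnorm (Cmul (thetaN term N k) (Cpow z k)))).
    { apply (ex_series_Rabs_le _ (fun k => B * q ^ k)).
      - intro; rewrite Rabs_pos_eq by apply Cnorm_ge0; auto.
      - apply (@ex_series_scal_l R_AbsRing R_NormedModule B).
        apply ex_series_geom. rewrite Rabs_pos_eq; lra. }
    pose proof (Cseries_cauchy_product _ _ _ _ Hc IHN Hca Hex) as Hcp.
    simpl euler_prod.
    replace (Cmul (euler_prod a t z N) (euler_factor a t z (S N)))
      with (Cmul (euler_factor a t z (S N)) (euler_prod a t z N)) by ring.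
    eapply Cseries_ext; [|exact Hcp]. intro k. simpl.
    rewrite (thetaN_S N k).
    match goal with |- _ = Cmul ?S ?P => replace (Cmul S P) with (Cmul P S) by ring end.
    rewrite <- Csum_upto_scal.
    apply Csum_upto_ext. intros n Hn.
    replace (Cpow z k) with (Cmul (Cpow z n) (Cpow z (k - n)))
      by (rewrite <- Cpow_add; f_equal; lia).
    ring.
Qed.

(* Letting N -> infinity (Tannery's theorem with the geometric majorant): the generating
   function of theta_{infty;.} converges absolutely and equals the infinite product. *)
Lemma gf_limit z : Cnorm z * M * (1 + T) < 1 ->
  let gf := CSeries (fun k => Cmul (theta_inf term k) (Cpow z k)) in
  Cseries_abs_conv (fun k => Cmul (theta_inf term k) (Cpow z k)) /\
  Cseries_cv (fun k => Cmul (theta_inf term k) (Cpow z k)) gf /\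
  Ccv (Cprod_upto (fun i => euler_factor a t z (S i))) gf.
Proof.
  intros Hz gf. destruct (thetaN_geometric_bound z Hz) as (B & q & Hq & HB).
  assert (HU : ex_series (fun k => B * q ^ k)).
  { apply (@ex_series_scal_l R_AbsRing R_NormedModule B).
    apply ex_series_geom. rewrite Rabs_pos_eq; lra. }
  assert (Hcv : forall k, Ccv (fun N => Cmul (thetaN term N k) (Cpow z k))
                              (Cmul (theta_inf term k) (Cpow z k)))
    by (intro k; apply Ccv_mul; [apply thetaN_cv|apply Ccv_const]).
  assert (Hv : forall k, Cnorm (Cmul (theta_inf term k) (Cpow z k)) <= B * q ^ k)
    by (intro k; eapply Ccv_norm_le; [apply Hcv|intro; apply HB]).
  split; [|split].
  - apply Cabs_conv_ex_series. refine (ex_series_Rabs_le _ _ _ HU).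
    intro k. rewrite Rabs_pos_eq by apply Cnorm_ge0. apply Hv.
  - apply CSeries_correct, (Cex_series_le _ _ Hv HU).
  - eapply Ccv_ext; [intro N; symmetry; apply Cprod_upto_euler_prod|].
    apply (Ccv_shift (euler_prod a t z)).
    eapply Ccv_ext; [intro N; symmetry; apply (Cseries_unique _ _ (gf_truncated z N Hz))|].
    apply (Ctannery (fun N k => Cmul (thetaN term N k) (Cpow z k)) _ (fun k => B * q ^ k)); auto.
Qed.

End Summands.

(** ** The exponential form *)

Lemma log_factor_args_small z m : Cnorm z * M * (1 + T) < 1 -> (1 <= m)%nat ->
  Cnorm (Cmul (Cmul (RtoC (a m)) z) (t m)) < 1 /\
  Cnorm (Cmul (Cmul (RtoC (a m)) z) (Csub (t m) C1)) < 1.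
Proof.
  intros Hz Hm. pose proof (Cnorm_ge0 z) as Hz0. pose proof (a_pos m Hm).
  destruct (disc_bounds (Cnorm z) m Hz0 Hz Hm) as (Hq0 & _ & _ & Hq).
  assert (Haz : 0 <= a m * Cnorm z) by nra.
  rewrite !Cnorm_mul, Cnorm_RtoC, Rabs_pos_eq by lra. split.
  - pose proof (Rmult_le_compat_l _ _ _ Haz (t_le_T m Hm)). lra.
  - pose proof (Cnorm_triangle_sub (t m) C1) as Htr. rewrite Cnorm_C1 in Htr.
    pose proof (Rmult_le_compat_l _ _ _ Haz (Rle_trans _ _ _ Htr (Rplus_le_compat_r 1 _ _ (t_le_T m Hm)))).
    lra.
Qed.

(* exp(L(v) - L(u)) = (1 - u)/(1 - v) = 1 + a_m z/(1 - a_m z t_m) for v = a_m z t_m and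
   u = a_m z (t_m - 1). *)
Lemma exp_log_factor z m : Cnorm z * M * (1 + T) < 1 -> (1 <= m)%nat ->
  Cexp (log_factor a t z m) = euler_factor a t z m.
Proof.
  intros Hz Hm. destruct (log_factor_args_small z m Hz Hm) as [Hv Hu].
  set (v := Cmul (Cmul (RtoC (a m)) z) (t m)) in *.
  set (u := Cmul (Cmul (RtoC (a m)) z) (Csub (t m) C1)) in *.
  pose proof (exp_log_series v Hv) as Ev. pose proof (exp_log_series u Hu) as Eu.
  pose proof (one_minus_neq0 v Hv) as Nv.
  assert (Hinv : Cmul (Cexp (log_series u)) (Cexp (Copp (log_series u))) = C1).
  { rewrite <- Cexp_add. replace (Cadd (log_series u) (Copp (log_series u))) with C0 by ring.
    apply Cexp_0. }
  assert (E1 : Cexp (log_series v) = Cinv (Csub C1 v)).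
  { transitivity (Cmul (Cmul (Cexp (log_series v)) (Csub C1 v)) (Cinv (Csub C1 v)));
      [field; auto|rewrite Ev; ring]. }
  assert (E2 : Cexp (Copp (log_series u)) = Csub C1 u).
  { transitivity (Cmul (Cmul (Cexp (log_series u)) (Csub C1 u)) (Cexp (Copp (log_series u))));
      [rewrite Eu; ring|].
    transitivity (Cmul (Cmul (Cexp (log_series u)) (Cexp (Copp (log_series u)))) (Csub C1 u));
      [ring|rewrite Hinv; ring]. }
  unfold log_factor, Csub at 1. fold v u. rewrite Cexp_add, E1, E2.
  unfold euler_factor, Cdiv. fold v. unfold u, v in *. field. auto.
Qed.

Lemma log_factor_series z m : Cnorm z * M * (1 + T) < 1 -> (1 <= m)%nat ->
  Cseries_cv (fun i => Cmul (Cdiv (Cpow z (S i)) (RtoC (INR (S i)))) (power_term a t (S i) m))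
             (log_factor a t z m).
Proof.
  intros Hz Hm. destruct (log_factor_args_small z m Hz Hm) as [Hv Hu].
  pose proof (Cseries_sub _ _ _ _ (proj1 (log_series_cv _ Hv)) (proj1 (log_series_cv _ Hu))) as Hs.
  eapply Cseries_ext; [|exact Hs]. intro i.
  unfold log_term, power_term, Cdiv. rewrite !Cpow_mul, <- RtoC_pow. ring.
Qed.

Definition power_bound (j : nat) : R := 2 * (1 + T) ^ j * M ^ (pred j).

Lemma power_bound_ge0 j : 0 <= power_bound j.
Proof.
  pose proof M_pos; pose proof T_nonneg. unfold power_bound.
  pose proof (pow_le (1+T) j ltac:(lra)). pose proof (pow_le M (pred j) ltac:(lra)). nra.
Qed.

(* |a_m^j (t_m^j - (t_m - 1)^j)| <= power_bound j a_m, as |t_m|, |t_m - 1| <= 1 + T. *)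
Lemma power_term_norm j m : (1 <= j)%nat -> (1 <= m)%nat ->
  Cnorm (power_term a t j m) <= power_bound j * a m.
Proof.
  intros Hj Hm. pose proof (a_pos m Hm). pose proof (a_le_M m Hm). pose proof (t_le_T m Hm).
  pose proof T_nonneg.
  unfold power_term, power_bound. rewrite Cnorm_mul, Cnorm_RtoC, Rabs_pos_eq by (apply pow_le; lra).
  assert (Hd : Cnorm (Csub (Cpow (t m) j) (Cpow (Csub (t m) C1) j)) <= 2 * (1 + T) ^ j).
  { eapply Rle_trans; [apply Cnorm_triangle_sub|]. rewrite !Cnorm_pow.
    pose proof (Cnorm_triangle_sub (t m) C1) as Htr. rewrite Cnorm_C1 in Htr.
    pose proof (Cnorm_ge0 (t m)). pose proof (Cnorm_ge0 (Csub (t m) C1)).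
    assert (Cnorm (t m) ^ j <= (1 + T) ^ j) by (apply pow_incr; lra).
    assert (Cnorm (Csub (t m) C1) ^ j <= (1 + T) ^ j) by (apply pow_incr; lra). lra. }
  assert (Ha2 : a m ^ j <= a m * M ^ pred j).
  { destruct j; [lia|]. simpl pred. simpl. apply Rmult_le_compat_l; [lra|]. apply pow_incr; lra. }
  apply Rle_trans with (a m * M ^ pred j * (2 * (1 + T) ^ j)); [|right; ring].
  apply Rmult_le_compat; auto; [apply pow_le; lra|apply Cnorm_ge0].
Qed.

Lemma power_sum_cv j : (1 <= j)%nat ->
  Cseries_cv (fun i => power_term a t j (S i)) (power_sum a t j) /\
  forall N, Cnorm (Csum_upto (fun i => power_term a t j (S i)) N) <= power_bound j * s.
Proof.
  intros Hj.
  assert (Hb : forall i, Cnorm (power_term a t j (S i)) <= power_bound j * a (S i))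
    by (intro; apply power_term_norm; lia).
  assert (Hex : ex_series (fun i => power_bound j * a (S i))).
  { apply (@ex_series_scal_l R_AbsRing R_NormedModule). exists s.
    apply is_series_Un_cv, a_summable. }
  split; [apply CSeries_correct, (Cex_series_le _ _ Hb Hex)|].
  intro N. eapply Rle_trans; [apply Csum_upto_norm|].
  eapply Rle_trans; [apply sum_Rle; intros; apply Hb|].
  replace (sum_f_R0 (fun i => power_bound j * a (S i)) N)
    with (power_bound j * sum_f_R0 (fun i => a (S i)) N)
    by (rewrite scal_sum; apply sum_eq; intros; ring).
  apply Rmult_le_compat_l; [apply power_bound_ge0|apply a_partial_le].
Qed.

Lemma exponent_domination z i : Cnorm z * M * (1 + T) < 1 ->
  forall N, Cnorm (Cmul (Cdiv (Cpow z (S i)) (RtoC (INR (S i))))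
                        (Csum_upto (fun i' => power_term a t (S i) (S i')) N))
            <= Cnorm z ^ S i * (power_bound (S i) * s).
Proof.
  intros Hz N. rewrite Cnorm_mul, <- Cnorm_pow.
  apply Rmult_le_compat; [apply Cnorm_ge0|apply Cnorm_ge0|apply Cnorm_div_INR; lia|].
  apply power_sum_cv; lia.
Qed.

(* The dominating sequence is geometric with ratio |z| M (1+T) < 1. *)
Lemma exponent_majorant_summable z : Cnorm z * M * (1 + T) < 1 ->
  ex_series (fun i => Cnorm z ^ S i * (power_bound (S i) * s)).
Proof.
  intro Hz. pose proof (Cnorm_ge0 z). pose proof M_pos. pose proof T_nonneg.
  apply (ex_series_ext (fun i => (2 * s * (1 + T) * Cnorm z) * (Cnorm z * M * (1 + T)) ^ i)).
  - intro i. unfold power_bound. simpl pred. rewrite !Rpow_mult_distr. simpl. ring.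
  - apply (@ex_series_scal_l R_AbsRing R_NormedModule). apply ex_series_geom.
    rewrite Rabs_pos_eq; [lra|]. apply Rmult_le_pos; [apply Rmult_le_pos|]; lra.
Qed.

(* Exchanging the sums over j and m (Tannery), the product of the exp(log_factor m)
   converges to exp of the exponent series. *)
Lemma exponential_form z : Cnorm z * M * (1 + T) < 1 ->
  (forall j, (1 <= j)%nat -> Cseries_cv (fun i => power_term a t j (S i)) (power_sum a t j)) /\
  Cseries_cv (exponent_term a t z) (CSeries (exponent_term a t z)) /\
  Ccv (Cprod_upto (fun i => euler_factor a t z (S i))) (Cexp (CSeries (exponent_term a t z))).
Proof.
  intros Hz.
  set (U := fun i => Cnorm z ^ S i * (power_bound (S i) * s)).
  assert (HU : ex_series U) by apply (exponent_majorant_summable z Hz).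
  assert (Hterm : forall i, Cnorm (exponent_term a t z i) <= U i).
  { intro i. eapply Ccv_norm_le; [apply Ccv_mul; [apply Ccv_const|apply power_sum_cv; lia]|].
    intro N. apply (exponent_domination z i Hz). }
  split; [intros j Hj; apply power_sum_cv; auto|].
  split; [apply CSeries_correct, (Cex_series_le _ _ Hterm HU)|].
  set (X := fun N => Csum_upto (fun i' => log_factor a t z (S i')) N).
  set (g := fun N i => Cmul (Cdiv (Cpow z (S i)) (RtoC (INR (S i))))
                            (Csum_upto (fun i' => power_term a t (S i) (S i')) N)).
  assert (Hg : forall N, X N = CSeries (g N)).
  { intro N. apply Cseries_unique. unfold g, X.
    eapply Cseries_ext; [intro i; apply Csum_upto_scal|].
    induction N; simpl.
    - eapply Cseries_ext; [|apply log_factor_series; auto]. reflexivity.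
    - eapply Cseries_ext; [|apply Cseries_add; [exact IHN|apply (log_factor_series z (S (S N)) Hz); lia]].
      intro i; reflexivity. }
  assert (HX : Ccv X (CSeries (exponent_term a t z))).
  { eapply Ccv_ext; [intro N; symmetry; apply Hg|].
    apply (Ctannery g _ U); auto.
    - intro i. apply Ccv_mul; [apply Ccv_const|apply power_sum_cv; lia].
    - intros N i. apply (exponent_domination z i Hz). }
  eapply Ccv_ext; [|apply Cexp_continuous, HX].
  intro N. unfold X. induction N; simpl.
  - rewrite exp_log_factor by (auto; lia). reflexivity.
  - rewrite Cexp_add, IHN, exp_log_factor by (auto; lia). reflexivity.
Qed.

End GeneratingFunction.

Lemma gf_conclusion (a : nat -> R) (t : nat -> Complex) (s M T : R) (term : list nat -> Complex) :
  (forall m, (1 <= m)%nat -> 0 < a m) -> Un_cv (sum_f_R0 (fun i => a (S i))) s ->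
  (forall m, (1 <= m)%nat -> a m <= M) -> (forall m, (1 <= m)%nat -> Cnorm (t m) <= T) ->
  block_multiplicative a t term ->
  GF_conclusion a t term (fun z => Cnorm z * M * (1 + T) < 1).
Proof.
  intros Ha Hs HM Ht Hterm. exists (theta_inf term). split.
  - intro k. split.
    + exact (abs_thetaN_bounded a t s M T Ha Hs HM Ht term Hterm k).
    + exact (thetaN_cv a t s M T Ha Hs HM Ht term Hterm k).
  - intros z Hz.
    destruct (gf_limit a t s M T Ha Hs HM Ht term Hterm z Hz) as (Habs & Hsum & Hprod).
    destruct (exponential_form a t s M T Ha Hs HM Ht z Hz) as (Hinner & Hexp & Hprod').
    split; [exact Habs|]. eexists; split; [exact Hsum|]. split; [exact Hprod|].
    exists (power_sum a t), (CSeries (exponent_term a t z)).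
    split; [exact Hinner|]. split; [exact Hexp|].
    exact (Ccv_unique _ _ _ Hprod Hprod').
Qed.

Theorem mainTheorem10 :
  forall (a : nat -> R) (M : R),
    (forall m : nat, (1 <= m)%nat -> 0 < a m) ->
    (exists s : R, Un_cv (sum_f_R0 (fun i => a (S i))) s) ->
    is_lub (fun x => exists m : nat, (1 <= m)%nat /\ x = a m) M ->
    (forall (t : nat -> Complex) (T : R),
        (forall m : nat, (1 <= m)%nat -> Cnorm (t m) <= T) ->
        GF_conclusion a t (term_vec a t) (fun z => Cnorm z * M * (1 + T) < 1))
    /\
    (forall (t : Complex) (T : R),
        Cnorm t <= T ->
        GF_conclusion a (fun _ => t) (term_sc a t) (fun z => Cnorm z * M * (1 + T) < 1)).
Proof.
  intros a M Ha [s Hs] [Hub _].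
  assert (HM : forall m, (1 <= m)%nat -> a m <= M) by (intros m Hm; apply Hub; exists m; auto).
  split.
  - intros t T Ht. apply (gf_conclusion a t s M T); auto. apply term_vec_multiplicative.
  - intros t T Ht. apply (gf_conclusion a (fun _ => t) s M T); auto.
    apply term_sc_multiplicative.
Qed.
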